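(* Let $G:\mathbb{R}\to\mathbb{R}$ satisfy: $G\ge 0$ and $\mathrm{supp}(G)=\mathbb{R}$; $G\in W^{1,1}(\mathbb{R})\cap L^\infty(\mathbb{R})\cap C^2(\mathbb{R})$; $G(x)=g(|x|)$ with $g'(r)<0$ for all $r>0$, $g''(0)<0$, $\lim_{r\to+\infty}g(r)=0$; and $\int G=1$. For $L>0$ let $X_L=\{f\in C^1([0,L]):f(0)=0\}$ with norm $\|f\|_{L^\infty}+\|f'\|_{L^\infty}$ and let $\mathcal{H}_L:X_L\to X_L$ be $$\mathcal{H}_L[u](x)=\int_0^L\big(G(x-y)-G(x+y)\big)u(y)\,dy.$$ Let $\varepsilon(L)$ be the simple eigenvalue of $\mathcal{H}_L$ equal to its spectral radius, which has an eigenfunction $u\ge0$ (equivalently, the number $\varepsilon(L)>0$ for which there is a symmetric $\rho\in C^2([-L,L])$ of unit mass with $\rho'\le0$ on $[0,L]$ solving $\varepsilon(L)\rho(x)=\int_{-L}^LG(x-y)\rho(y)\,dy+C$ on $[-L,L]$, with $u=-\rho'$). Then $\varepsilon(L)$ is uniquely determined as a function of $L$, and: (i) $\varepsilon(L)$ is strictly increasing in $L$; (ii) $\lim_{L\to+\infty}\varepsilon(L)=1$; (iii) $\varepsilon(0)=0$, where for $L=0$ the operator $\mathcal{H}_0$ is the zero operator.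
   Context: Eigenvalue equation: $\varepsilon u=\mathcal{H}_L[u]$. *)

From Stdlib Require Import Reals.
From Coquelicot Require Import Coquelicot.
Open Scope R_scope.

Definition cont_on (a b : R) (f : R -> R) : Prop :=
  forall x, a <= x <= b -> forall eps, 0 < eps -> exists delta, 0 < delta /\
    forall y, a <= y <= b -> Rabs (y - x) < delta -> Rabs (f y - f x) < eps.

Definition C1_on (a b : R) (f : R -> R) : Prop :=
  exists df : R -> R, cont_on a b df /\
    forall x, a <= x <= b -> f x = f a + RInt df a x.

Definition X_L (L : R) (f : R -> R) : Prop := C1_on 0 L f /\ f 0 = 0.

(* supp(G) = R : the closure of {G <> 0} is all of R. *)
Definition full_support (G : R -> R) : Prop :=
  forall x eps, 0 < eps -> exists y, Rabs (y - x) < eps /\ G y <> 0.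

Definition C2 (G : R -> R) : Prop :=
  forall x, ex_derive G x /\ ex_derive (Derive G) x /\
            continuous (Derive (Derive G)) x.

Definition integrable_R (f : R -> R) : Prop :=
  ex_RInt_gen (fun x => Rabs (f x)) (Rbar_locally m_infty) (Rbar_locally p_infty).

Definition kernel_hyp (G : R -> R) : Prop :=
  (forall x, 0 <= G x) /\
  full_support G /\
  (* G in W^{1,1}(R) (G is C^2, so its weak derivative is Derive G) *)
  integrable_R G /\ integrable_R (Derive G) /\
  (exists M, forall x, Rabs (G x) <= M) /\
  C2 G /\
  (exists g : R -> R, (forall x, G x = g (Rabs x)) /\
     (forall r, 0 < r -> ex_derive g r /\ Derive g r < 0) /\
     (* g''(0) < 0 : second (one-sided) derivative of g at 0, which equals G''(0) *)
     Derive (Derive G) 0 < 0 /\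
     is_lim g p_infty 0) /\
  is_RInt_gen G (Rbar_locally m_infty) (Rbar_locally p_infty) 1.

Definition H_op (G : R -> R) (L : R) (u : R -> R) (x : R) : R :=
  RInt (fun y => (G (x - y) - G (x + y)) * u y) 0 L.

Definition pos_eigenvalue (G : R -> R) (L e : R) : Prop :=
  exists u : R -> R, X_L L u /\
    (forall x, 0 <= x <= L -> 0 <= u x) /\
    (exists x, 0 <= x <= L /\ u x <> 0) /\
    (forall x, 0 <= x <= L -> e * u x = H_op G L u x).

From Stdlib Require Import Reals Lra Lia IndefiniteDescription.
From Coquelicot Require Import Coquelicot.
Open Scope R_scope.

(* The kernel [k(x,y) = G(x-y) - G(x+y)] of [H_L] satisfies [c x y <= k(x,y) <= C x y] on [[0,L]^2]
   (from [g''(0) < 0] and [g' < 0]), so [H_L] maps every nonnegative function to one comparable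
   with [x].  Along the power iteration [f_0 = x], [f_(n+1) = H_L f_n], the best constants in
   [m_n f_n <= f_(n+1) <= M_n f_n] therefore satisfy [M_(n+1) - m_(n+1) <= (1 - c/C)(M_n - m_n)],
   and [f_n], normalized by its moment [int y f_n(y) dy], converges uniformly at a geometric rate
   to a positive eigenfunction; its eigenvalue is [lim m_n = lim M_n].
   If [b g <= H_L g] for some nonnegative [g <> 0] and [H_L f <= a f] with [f >= K g], iterating
   gives [K b^n g <= a^n f], whence [b <= a].  This comparison yields uniqueness among nonnegative
   eigenfunctions, and strict monotonicity in [L]: restricted to [[0,L1]], the eigenfunction for
   [L2 > L1] is a supersolution with a strictly smaller rate.
   Finally [eps(L) <= 1] by evaluating the eigen-equation at a maximum of the eigenfunction and
   using [int G = 1], while [H_L] is symmetric, so [eps(L)] bounds the Rayleigh quotient of a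
   plateau function [psi] ([0] on [[0,1]], [1] on [[2,L]]), and [int psi H_L psi >= (1 - o(1)) L]
   because [G] has tails of small mass. *)

Definition continuous_R (f : R -> R) := forall x, continuous f x.

Lemma continuous_continuity_pt (f : R -> R) x : continuous f x <-> continuity_pt f x.
Proof. rewrite continuity_pt_filterlim. tauto. Qed.

Lemma continuous_Ropp (f : R -> R) x : continuous f x -> continuous (fun t => - f t) x.
Proof. intros; apply (continuous_opp (V := R_NormedModule)); auto. Qed.

Lemma continuous_Rplus (f g : R -> R) x :
  continuous f x -> continuous g x -> continuous (fun t => f t + g t) x.
Proof. intros; apply (continuous_plus (V := R_NormedModule)); auto. Qed.

Lemma continuous_Rminus (f g : R -> R) x :
  continuous f x -> continuous g x -> continuous (fun t => f t - g t) x.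
Proof. intros; apply (continuous_minus (V := R_NormedModule)); auto. Qed.

Lemma continuous_Rmult (f g : R -> R) x :
  continuous f x -> continuous g x -> continuous (fun t => f t * g t) x.
Proof. intros; apply (continuous_mult (K := R_AbsRing)); auto. Qed.

Lemma continuous_Rconst (c x : R) : continuous (fun _ => c) x.
Proof. apply continuous_const. Qed.

Lemma continuous_Rid (x : R) : continuous (fun t => t) x.
Proof. apply continuous_id. Qed.

Lemma continuous_Rcomp (f g : R -> R) x :
  continuous f x -> continuous g (f x) -> continuous (fun t => g (f t)) x.
Proof. intros; apply (continuous_comp f g); auto. Qed.

Lemma continuous_Rabs x : continuous Rabs x.
Proof. apply continuous_continuity_pt, Rcontinuity_abs. Qed.

Lemma ex_derive_continuous_R (f : R -> R) x : ex_derive f x -> continuous f x.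
Proof. apply (@ex_derive_continuous R_AbsRing R_NormedModule). Qed.

Create HintDb Rcont.
#[export] Hint Resolve continuous_Ropp continuous_Rplus continuous_Rminus continuous_Rmult
  continuous_Rconst continuous_Rid : Rcont.
#[export] Hint Extern 1 (continuous (fun t => ?g (?f t)) _) =>
  apply (continuous_Rcomp f g) : Rcont.
#[export] Hint Extern 2 (continuous ?f _) =>
  match goal with H : continuous_R f |- _ => apply H end : Rcont.

Lemma continuous_Reps (f : R -> R) x : continuous f x ->
  forall eps, 0 < eps -> exists d, 0 < d /\
    forall y, Rabs (y - x) < d -> Rabs (f y - f x) < eps.
Proof.
  intros Hc eps He.
  destruct (proj1 (filterlim_locally f (f x)) Hc (mkposreal _ He)) as [d Hd].
  exists d. split; [apply cond_pos|]. intros y Hy. apply Hd, Hy.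
Qed.

Lemma continuous_of_Reps (f : R -> R) x :
  (forall eps, 0 < eps -> exists d, 0 < d /\
     forall y, Rabs (y - x) < d -> Rabs (f y - f x) < eps) ->
  continuous f x.
Proof.
  intros H. apply (proj2 (filterlim_locally f (f x))). intros eps.
  destruct (H eps (cond_pos eps)) as (d & Hd & Hd').
  exists (mkposreal d Hd). intros y Hy. apply Hd', Hy.
Qed.

Lemma continuous_R_cont_on (f : R -> R) a b : continuous_R f -> cont_on a b f.
Proof.
  intros Hf x _ eps He. destruct (continuous_Reps f x (Hf x) eps He) as (d & Hd & Hd').
  exists d. split; auto.
Qed.

Lemma Rabs_sub_le u v : Rabs (u - v) <= Rabs u + Rabs v.
Proof. unfold Rminus. rewrite <- (Rabs_Ropp v). apply Rabs_triang. Qed.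

Lemma MVT_Rle (f df : R -> R) a b : a <= b ->
  (forall x, a <= x <= b -> is_derive f x (df x)) ->
  exists c, a <= c <= b /\ f b - f a = df c * (b - a).
Proof.
  intros Hab Hd.
  destruct (MVT_gen f a b df) as (c & Hc & E).
  - intros x Hx. rewrite Rmin_left, Rmax_right in Hx by lra. apply Hd; lra.
  - intros x Hx. rewrite Rmin_left, Rmax_right in Hx by lra.
    apply continuous_continuity_pt, ex_derive_continuous_R. eexists. apply Hd. lra.
  - rewrite Rmin_left, Rmax_right in Hc by lra. eauto.
Qed.

Lemma bounded_on_segment (f : R -> R) a b : a <= b ->
  (forall x, a <= x <= b -> continuous f x) ->
  exists M, 0 <= M /\ forall x, a <= x <= b -> Rabs (f x) <= M.
Proof.
  intros Hab Hc.
  destruct (continuity_ab_maj (fun t => Rabs (f t)) a b Hab) as (Mx & HM & _).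
  { intros c Hc'. apply continuous_continuity_pt.
    apply (continuous_Rcomp f Rabs); [apply Hc; auto | apply continuous_Rabs]. }
  exists (Rabs (f Mx)). split; [apply Rabs_pos | auto].
Qed.

Lemma C1_locally_lipschitz (F : R -> R) :
  (forall x, ex_derive F x) -> continuous_R (Derive F) ->
  forall R0, exists B, 0 <= B /\ forall u v, Rabs u <= R0 -> Rabs v <= R0 ->
    Rabs (F u - F v) <= B * Rabs (u - v).
Proof.
  intros Hd Hc R0.
  destruct (Rle_dec 0 R0) as [HR|HR].
  2:{ exists 0. split; [lra|]. intros u v Hu. pose proof (Rabs_pos u). lra. }
  destruct (bounded_on_segment (Derive F) (- R0) R0) as (B & HB & HB'); [lra | auto |].
  exists B. split; auto.
  assert (Hle : forall u v, - R0 <= u <= v -> v <= R0 -> Rabs (F v - F u) <= B * Rabs (v - u)).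
  { intros u v Huv Hv.
    destruct (MVT_Rle F (Derive F) u v) as (c & Hc' & ->); [lra | intros; apply Derive_correct, Hd |].
    rewrite Rabs_mult. apply Rmult_le_compat_r; [apply Rabs_pos | apply HB'; lra]. }
  intros u v Hu Hv. apply Rabs_le_between in Hu. apply Rabs_le_between in Hv.
  destruct (Rle_dec u v).
  - rewrite Rabs_minus_sym, (Rabs_minus_sym u). apply Hle; lra.
  - apply Hle; lra.
Qed.

Lemma ex_RInt_continuous_R (f : R -> R) a b : continuous_R f -> ex_RInt f a b.
Proof. intros Hf. apply (@ex_RInt_continuous R_CompleteNormedModule). intros; apply Hf. Qed.

Lemma ex_RInt_Rminus (f g : R -> R) a b :
  ex_RInt f a b -> ex_RInt g a b -> ex_RInt (fun x => f x - g x) a b.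
Proof. apply (@ex_RInt_minus R_NormedModule). Qed.

Lemma ex_RInt_Rscal (f : R -> R) a b l : ex_RInt f a b -> ex_RInt (fun x => l * f x) a b.
Proof. apply (@ex_RInt_scal R_NormedModule). Qed.

Lemma RInt_Rscal (f : R -> R) a b l : ex_RInt f a b -> RInt (fun x => l * f x) a b = l * RInt f a b.
Proof. apply (@RInt_scal R_CompleteNormedModule). Qed.

Lemma RInt_Ropp (f : R -> R) a b : ex_RInt f a b -> RInt (fun x => - f x) a b = - RInt f a b.
Proof.
  intros Hf. replace (- RInt f a b) with (-1 * RInt f a b) by ring.
  rewrite <- RInt_Rscal by auto. apply RInt_ext. intros; simpl; ring.
Qed.

Lemma RInt_Rminus (f g : R -> R) a b : ex_RInt f a b -> ex_RInt g a b ->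
  RInt (fun x => f x - g x) a b = RInt f a b - RInt g a b.
Proof. apply (@RInt_minus R_CompleteNormedModule). Qed.

Lemma RInt_Rplus (f g : R -> R) a b : ex_RInt f a b -> ex_RInt g a b ->
  RInt (fun x => f x + g x) a b = RInt f a b + RInt g a b.
Proof. apply (@RInt_plus R_CompleteNormedModule). Qed.

Lemma RInt_Rconst (c a b : R) : RInt (fun _ => c) a b = (b - a) * c.
Proof. apply (@RInt_const R_CompleteNormedModule). Qed.

Lemma RInt_RChasles (f : R -> R) a b c : ex_RInt f a b -> ex_RInt f b c ->
  RInt f a b + RInt f b c = RInt f a c.
Proof. apply (@RInt_Chasles R_CompleteNormedModule). Qed.

Lemma RInt_Rswap (f : R -> R) a b : ex_RInt f a b -> RInt f b a = - RInt f a b.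
Proof. intros H. rewrite <- (@opp_RInt_swap R_CompleteNormedModule f a b H). reflexivity. Qed.

Lemma RInt_ext_le (f g : R -> R) a b : a <= b ->
  (forall x, a <= x <= b -> f x = g x) -> RInt f a b = RInt g a b.
Proof.
  intros Hab H. apply RInt_ext. intros x Hx. rewrite Rmin_left, Rmax_right in Hx by lra. apply H; lra.
Qed.

Lemma RInt_Rle (f g : R -> R) a b : a <= b -> ex_RInt f a b -> ex_RInt g a b ->
  (forall x, a <= x <= b -> f x <= g x) -> RInt f a b <= RInt g a b.
Proof. intros Hab H1 H2 H. apply RInt_le; auto. intros; apply H; lra. Qed.

Lemma RInt_Rnonneg (f : R -> R) a b : a <= b -> ex_RInt f a b ->
  (forall x, a <= x <= b -> 0 <= f x) -> 0 <= RInt f a b.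
Proof.
  intros Hab H1 H.
  assert (E : RInt (fun _ => 0) a b = 0) by (rewrite RInt_Rconst; apply Rmult_0_r).
  rewrite <- E. apply RInt_Rle; auto. apply ex_RInt_const.
Qed.

Lemma RInt_Rge_const (f : R -> R) a b m : a <= b -> continuous_R f ->
  (forall x, a <= x <= b -> m <= f x) -> (b - a) * m <= RInt f a b.
Proof.
  intros Hab Hf Hm. rewrite <- RInt_Rconst.
  apply RInt_Rle; auto; [apply ex_RInt_const | apply ex_RInt_continuous_R; auto].
Qed.

Lemma RInt_Rpos (f : R -> R) a b x0 : continuous_R f ->
  (forall y, a <= y <= b -> 0 <= f y) -> a < x0 <= b -> 0 < f x0 -> 0 < RInt f a b.
Proof.
  intros Hf Hp Hx Hx0.
  destruct (continuous_Reps f x0 (Hf x0) (f x0 / 2)) as (d & Hd & Hd'); [lra|].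
  set (a' := Rmax a (x0 - d / 2)).
  assert (Ha' : a <= a' < x0) by (unfold a', Rmax; destruct (Rle_dec a (x0 - d / 2)); lra).
  assert (Ha2 : x0 - d / 2 <= a') by apply Rmax_r.
  assert (Ex : forall u v, ex_RInt f u v) by (intros; apply ex_RInt_continuous_R, Hf).
  rewrite <- (RInt_RChasles f a a' b), <- (RInt_RChasles f a' x0 b) by auto.
  assert (0 <= RInt f a a') by (apply RInt_Rnonneg; [lra | auto | intros; apply Hp; lra]).
  assert (0 <= RInt f x0 b) by (apply RInt_Rnonneg; [lra | auto | intros; apply Hp; lra]).
  assert (0 < RInt f a' x0).
  { apply RInt_gt_0; [lra | | intros; apply Hf].
    intros y Hy. assert (Hy' : Rabs (y - x0) < d) by (apply Rabs_def1; lra).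
    apply Hd', Rabs_def2 in Hy'. lra. }
  lra.
Qed.

Lemma is_derive_RInt_upper (f : R -> R) a t : continuous_R f ->
  is_derive (fun s => RInt f a s) t (f t).
Proof.
  intros Hf. apply (@is_derive_RInt R_NormedModule f (fun s => RInt f a s) a t); [| apply Hf].
  exists (mkposreal 1 Rlt_0_1). intros y _.
  apply (@RInt_correct R_CompleteNormedModule), ex_RInt_continuous_R, Hf.
Qed.

Lemma continuity_2d_pt_lin (F : R -> R) al be x t : continuous_R F ->
  continuity_2d_pt (fun u w => F (al * u + be * w)) x t.
Proof.
  intros Hc. apply (continuity_1d_2d_pt_comp F (fun u w => al * u + be * w)).
  - apply continuous_continuity_pt, Hc.
  - apply continuity_2d_pt_plus; apply continuity_2d_pt_mult;
      auto using continuity_2d_pt_const, continuity_2d_pt_id1, continuity_2d_pt_id2.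
Qed.

Lemma RInt_comp_reflect (F : R -> R) x a b : continuous_R F ->
  RInt (fun y => F (x - y)) a b = RInt F (x - b) (x - a).
Proof.
  intros Hc.
  pose proof (@RInt_comp_lin R_CompleteNormedModule F (-1) x a b (ex_RInt_continuous_R _ _ _ Hc)) as E.
  rewrite (RInt_Rswap F (x - a) (x - b)) by (apply ex_RInt_continuous_R, Hc).
  replace (x - a) with (-1 * a + x) by ring. replace (x - b) with (-1 * b + x) by ring.
  rewrite <- E, <- RInt_Ropp.
  - apply RInt_ext. intros y _. unfold scal; simpl; unfold mult; simpl.
    replace (-1 * y + x) with (x - y) by ring. ring.
  - apply (@ex_RInt_comp_lin R_NormedModule), ex_RInt_continuous_R, Hc.
Qed.

Lemma RInt_comp_shift (F : R -> R) x a b : continuous_R F ->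
  RInt (fun y => F (x + y)) a b = RInt F (x + a) (x + b).
Proof.
  intros Hc.
  pose proof (@RInt_comp_lin R_CompleteNormedModule F 1 x a b (ex_RInt_continuous_R _ _ _ Hc)) as E.
  replace (x + a) with (1 * a + x) by ring. replace (x + b) with (1 * b + x) by ring.
  rewrite <- E. apply RInt_ext. intros y _. unfold scal; simpl; unfold mult; simpl.
  rewrite Rmult_1_l. f_equal. ring.
Qed.

Lemma continuous_Rmax_const (f : R -> R) a x : continuous f x -> continuous (fun t => Rmax (f t) a) x.
Proof.
  intros Hf. apply continuous_of_Reps. intros eps He.
  destruct (continuous_Reps f x Hf eps He) as (d & Hd & Hd'). exists d. split; auto.
  intros y Hy. apply Rle_lt_trans with (Rabs (f y - f x)); [|auto].
  unfold Rmax. destruct (Rle_dec (f y) a); destruct (Rle_dec (f x) a); apply Rabs_le;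
    pose proof (Rle_abs (f y - f x)); pose proof (Rle_abs (- (f y - f x))); rewrite Rabs_Ropp in *; lra.
Qed.

Definition clamp (L x : R) := Rmax 0 (Rmin x L).

Lemma clamp_in L x : 0 <= L -> 0 <= clamp L x <= L.
Proof. intros HL. unfold clamp, Rmax, Rmin. destruct (Rle_dec x L); destruct (Rle_dec 0 _); lra. Qed.

Lemma clamp_id L x : 0 <= x <= L -> clamp L x = x.
Proof. intros Hx. unfold clamp, Rmax, Rmin. destruct (Rle_dec x L); destruct (Rle_dec 0 _); lra. Qed.

Lemma clamp_1_lipschitz L x y : 0 <= L -> Rabs (clamp L y - clamp L x) <= Rabs (y - x).
Proof.
  intros HL. unfold clamp, Rmax, Rmin.
  destruct (Rle_dec y L); destruct (Rle_dec x L); destruct (Rle_dec 0 y); destruct (Rle_dec 0 x);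
  destruct (Rle_dec 0 L); try lra;
  repeat match goal with |- context [Rle_dec ?a ?b] => destruct (Rle_dec a b) end;
  apply Rabs_le; pose proof (Rle_abs (y - x)); pose proof (Rle_abs (- (y - x)));
  rewrite Rabs_Ropp in *; lra.
Qed.

Lemma continuous_R_clamp L (f : R -> R) : 0 <= L -> cont_on 0 L f ->
  continuous_R (fun x => f (clamp L x)).
Proof.
  intros HL Hf x. apply continuous_of_Reps. intros eps He.
  destruct (Hf (clamp L x) (clamp_in L x HL) eps He) as (d & Hd & Hd').
  exists d. split; auto. intros y Hy. apply Hd'; [apply clamp_in; auto|].
  pose proof (clamp_1_lipschitz L x y HL). lra.
Qed.

Lemma C1_on_cont_on (u : R -> R) L : 0 <= L -> C1_on 0 L u -> cont_on 0 L u.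
Proof.
  intros HL (df & Hdf & Hu).
  set (dft := fun x => df (clamp L x)).
  assert (Cd : continuous_R dft) by (apply continuous_R_clamp; auto).
  destruct (bounded_on_segment dft 0 L HL) as (M & HM & HM'); [intros; apply Cd|].
  assert (E : forall t, 0 <= t <= L -> u t = u 0 + RInt dft 0 t).
  { intros t Ht. rewrite Hu by auto. f_equal. apply RInt_ext_le; [lra|].
    intros y Hy. unfold dft. rewrite clamp_id; auto; lra. }
  assert (Lip : forall s t, 0 <= s <= t -> t <= L -> Rabs (u t - u s) <= M * (t - s)).
  { intros s t Hst Ht. rewrite (E t), (E s) by lra.
    rewrite <- (RInt_RChasles dft 0 s t) by (apply ex_RInt_continuous_R, Cd).
    assert (Ex : u 0 + (RInt dft 0 s + RInt dft s t) - (u 0 + RInt dft 0 s) = RInt dft s t) by ring.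
    rewrite Ex.
    replace (M * (t - s)) with ((t - s) * M) by ring.
    apply abs_RInt_le_const; [lra | apply ex_RInt_continuous_R, Cd | intros; apply HM'; lra]. }
  intros x Hx eps He. exists (eps / (M + 1)). split; [apply Rdiv_lt_0_compat; lra|].
  intros y Hy Hxy.
  assert (Rabs (u y - u x) <= M * Rabs (y - x)).
  { destruct (Rle_dec x y).
    - rewrite (Rabs_right (y - x)) by lra. apply Lip; lra.
    - rewrite Rabs_minus_sym, (Rabs_minus_sym y), (Rabs_right (x - y)) by lra. apply Lip; lra. }
  apply Rle_lt_trans with ((M + 1) * Rabs (y - x)); [pose proof (Rabs_pos (y - x)); nra|].
  replace eps with ((M + 1) * (eps / (M + 1))) by (field; lra). apply Rmult_lt_compat_l; lra.
Qed.

Definition plateau x := clamp 1 (x - 1).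

Lemma plateau_range x : 0 <= plateau x <= 1.
Proof. apply clamp_in; lra. Qed.

Lemma plateau_zero x : x <= 1 -> plateau x = 0.
Proof.
  intros Hx. unfold plateau, clamp, Rmax, Rmin.
  destruct (Rle_dec (x - 1) 1); destruct (Rle_dec 0 _); lra.
Qed.

Lemma plateau_one x : 2 <= x -> plateau x = 1.
Proof.
  intros Hx. unfold plateau, clamp, Rmax, Rmin.
  destruct (Rle_dec (x - 1) 1); destruct (Rle_dec 0 _); lra.
Qed.

Lemma plateau_continuous : continuous_R plateau.
Proof.
  intros x. apply continuous_of_Reps. intros eps He. exists eps. split; auto. intros y Hy.
  unfold plateau. eapply Rle_lt_trans; [apply clamp_1_lipschitz; lra|].
  replace (y - 1 - (x - 1)) with (y - x) by ring. auto.
Qed.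

Lemma pow_small q : 0 <= q < 1 -> forall eps, 0 < eps -> exists N, q ^ N < eps.
Proof.
  intros Hq eps He.
  destruct (pow_lt_1_zero q ltac:(rewrite Rabs_right; lra) eps He) as (N & HN).
  exists N. specialize (HN N (le_n N)). rewrite Rabs_right in HN; auto.
  apply Rle_ge, pow_le; lra.
Qed.

Lemma pow_le_pow_le1 q n N : 0 <= q <= 1 -> (N <= n)%nat -> q ^ n <= q ^ N.
Proof.
  intros Hq Hn. induction Hn; [lra|].
  simpl. pose proof (pow_le q m (proj1 Hq)). nra.
Qed.

Lemma pow_unbounded t B : 1 < t -> exists n, B < t ^ n.
Proof.
  intros Ht. pose proof (is_lim_seq_geom_p t Ht) as Hl.
  apply is_lim_seq_spec in Hl. destruct (Hl B) as (N & HN). exists N. apply HN. lia.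
Qed.

Lemma is_lim_seq_geom_bound (u : nat -> R) (l K q : R) : 0 <= q < 1 ->
  (forall n, Rabs (u n - l) <= K * q ^ n) -> is_lim_seq u l.
Proof.
  intros Hq Hb. apply is_lim_seq_spec. intros eps.
  pose proof (cond_pos eps). pose proof (Rabs_pos K). pose proof (Rle_abs K).
  destruct (pow_small q Hq (eps / (Rabs K + 1))) as (N & HN); [apply Rdiv_lt_0_compat; lra|].
  exists N. intros n Hn. eapply Rle_lt_trans; [apply Hb|].
  pose proof (pow_le_pow_le1 q n N ltac:(lra) Hn). pose proof (pow_le q n (proj1 Hq)).
  apply Rle_lt_trans with ((Rabs K + 1) * q ^ N); [nra|].
  replace (pos eps) with ((Rabs K + 1) * (eps / (Rabs K + 1))) by (field; lra).
  apply Rmult_lt_compat_l; lra.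
Qed.

Lemma is_lim_seq_Lim_seq_Cauchy (u : nat -> R) :
  (forall eps, 0 < eps -> exists N, forall n m, (N <= n)%nat -> (N <= m)%nat ->
     Rabs (u n - u m) < eps) ->
  is_lim_seq u (real (Lim_seq u)).
Proof.
  intros H.
  assert (Hc : ex_lim_seq_cauchy u).
  { intros eps. destruct (H eps (cond_pos eps)) as (N & HN). exists N. auto. }
  apply ex_lim_seq_cauchy_corr in Hc. destruct Hc as (l & Hl).
  rewrite (is_lim_seq_unique _ _ Hl). exact Hl.
Qed.

Lemma is_lim_seq_le_const (u : nat -> R) (l a : R) N : is_lim_seq u l ->
  (forall n, (N <= n)%nat -> u n <= a) -> l <= a.
Proof.
  intros Hl Hu. apply (is_lim_seq_incr_n u N) in Hl.
  apply (is_lim_seq_le (fun n => u (n + N)%nat) (fun _ => a) l a); auto.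
  - intros n; apply Hu; lia.
  - apply is_lim_seq_const.
Qed.

Lemma is_lim_seq_ge_const (u : nat -> R) (l a : R) N : is_lim_seq u l ->
  (forall n, (N <= n)%nat -> a <= u n) -> a <= l.
Proof.
  intros Hl Hu. apply (is_lim_seq_incr_n u N) in Hl.
  apply (is_lim_seq_le (fun _ => a) (fun n => u (n + N)%nat) a l); auto.
  - intros n; apply Hu; lia.
  - apply is_lim_seq_const.
Qed.

Lemma is_lim_seq_between (u : nat -> R) (l a b : R) N : is_lim_seq u l ->
  (forall n, (N <= n)%nat -> a <= u n <= b) -> a <= l <= b.
Proof.
  intros Hl Hu. split.
  - apply (is_lim_seq_ge_const u l a N Hl). intros n Hn; apply Hu, Hn.
  - apply (is_lim_seq_le_const u l b N Hl). intros n Hn; apply Hu, Hn.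
Qed.

Lemma geometric_tail_small K q : 0 <= K -> 0 <= q < 1 -> forall eps, 0 < eps ->
  exists N, forall n, (N <= n)%nat -> K * q ^ n / (1 - q) < eps.
Proof.
  intros HK Hq eps He.
  destruct (pow_small q Hq (eps * (1 - q) / (K + 1))) as (N & HN); [apply Rdiv_lt_0_compat; nra|].
  exists N. intros n Hn.
  pose proof (pow_le_pow_le1 q n N ltac:(lra) Hn). pose proof (pow_le q n (proj1 Hq)).
  apply Rmult_lt_reg_r with (1 - q); [lra|].
  replace (K * q ^ n / (1 - q) * (1 - q)) with (K * q ^ n) by (field; lra).
  apply Rle_lt_trans with ((K + 1) * q ^ N); [nra|].
  replace (eps * (1 - q)) with ((K + 1) * (eps * (1 - q) / (K + 1))) by (field; lra).
  apply Rmult_lt_compat_l; lra.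
Qed.

Section GeometricLimit.

Variables (g : nat -> R -> R) (L K q : R).
Hypothesis HL : 0 <= L.
Hypothesis Hq : 0 <= q < 1.
Hypothesis Hstep : forall n x, 0 <= x <= L -> Rabs (g (S n) x - g n x) <= K * q ^ n.

Lemma geometric_step_nonneg : 0 <= K.
Proof.
  pose proof (Hstep 0 0 ltac:(lra)) as H. pose proof (Rabs_pos (g 1%nat 0 - g 0%nat 0)).
  simpl in H. lra.
Qed.

Lemma geometric_tail_sum n j x : 0 <= x <= L ->
  Rabs (g (n + j) x - g n x) <= K * q ^ n * (1 - q ^ j) / (1 - q).
Proof.
  intros Hx. induction j.
  - rewrite Nat.add_0_r, Rminus_diag, Rabs_R0. simpl. right; field; lra.
  - rewrite Nat.add_succ_r.
    replace (g (S (n + j)) x - g n x)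
      with ((g (S (n + j)) x - g (n + j) x) + (g (n + j) x - g n x)) by ring.
    eapply Rle_trans; [apply Rabs_triang|].
    pose proof (Hstep (n + j) x Hx) as H. rewrite pow_add in H.
    apply Rle_trans with (K * (q ^ n * q ^ j) + K * q ^ n * (1 - q ^ j) / (1 - q)); [lra|].
    right. simpl. field. lra.
Qed.

Lemma geometric_tail n k x : 0 <= x <= L -> (n <= k)%nat ->
  Rabs (g k x - g n x) <= K * q ^ n / (1 - q).
Proof.
  intros Hx Hk. replace k with (n + (k - n))%nat by lia.
  eapply Rle_trans; [apply geometric_tail_sum, Hx|].
  pose proof geometric_step_nonneg. pose proof (pow_le q (k - n) (proj1 Hq)).
  assert (0 <= K * q ^ n) by (apply Rmult_le_pos; auto; apply pow_le; lra).
  unfold Rdiv. apply Rmult_le_compat_r; [apply Rlt_le, Rinv_0_lt_compat; lra | nra].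
Qed.

Definition pointwise_limit (x : R) := real (Lim_seq (fun n => g n x)).

Lemma pointwise_limit_is_lim x : 0 <= x <= L ->
  is_lim_seq (fun n => g n x) (pointwise_limit x).
Proof.
  intros Hx. apply is_lim_seq_Lim_seq_Cauchy. intros eps He.
  destruct (geometric_tail_small K q geometric_step_nonneg Hq (eps / 2)) as (N & HN); [lra|].
  exists N. intros n k Hn Hk.
  pose proof (geometric_tail N n x Hx Hn). pose proof (geometric_tail N k x Hx Hk).
  pose proof (HN N (le_n N)).
  replace (g n x - g k x) with ((g n x - g N x) - (g k x - g N x)) by ring.
  pose proof (Rabs_sub_le (g n x - g N x) (g k x - g N x)). lra.
Qed.

Lemma pointwise_limit_close n x : 0 <= x <= L ->
  Rabs (pointwise_limit x - g n x) <= K * q ^ n / (1 - q).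
Proof.
  intros Hx. apply Rabs_le_between'.
  apply (is_lim_seq_between _ _ _ _ n (pointwise_limit_is_lim x Hx)).
  intros k Hk. apply Rabs_le_between', geometric_tail; auto.
Qed.

Lemma pointwise_limit_clamp_continuous : (forall n, continuous_R (g n)) ->
  continuous_R (fun x => pointwise_limit (clamp L x)).
Proof.
  intros Hg x. apply continuous_of_Reps. intros eps He.
  destruct (geometric_tail_small K q geometric_step_nonneg Hq (eps / 3)) as (N & HN); [lra|].
  specialize (HN N (le_n N)).
  destruct (continuous_Reps _ _ (Hg N (clamp L x)) (eps / 3)) as (d & Hd & Hd'); [lra|].
  exists d. split; auto. intros y Hy.
  pose proof (pointwise_limit_close N (clamp L y) (clamp_in L y HL)).
  pose proof (pointwise_limit_close N (clamp L x) (clamp_in L x HL)).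
  pose proof (Hd' (clamp L y) ltac:(pose proof (clamp_1_lipschitz L x y HL); lra)).
  set (ly := pointwise_limit (clamp L y)) in *. set (lx := pointwise_limit (clamp L x)) in *.
  set (gy := g N (clamp L y)) in *. set (gx := g N (clamp L x)) in *.
  replace (ly - lx) with ((ly - gy) + (gy - gx) - (lx - gx)) by ring.
  pose proof (Rabs_sub_le ((ly - gy) + (gy - gx)) (lx - gx)).
  pose proof (Rabs_triang (ly - gy) (gy - gx)). lra.
Qed.

End GeometricLimit.

Lemma normalized_ratio_close m M P P' a b : 0 < m -> m <= M -> 0 < P -> 0 <= a ->
  m * a <= b <= M * a -> m * P <= P' <= M * P ->
  Rabs (b / P' - a / P) <= (M - m) / m * (a / P).
Proof.
  intros Hm HmM HP Ha Hb HP'.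
  assert (HP'' : 0 < P') by nra.
  set (z := a / P). set (y := b / P').
  assert (Ea : a = z * P) by (unfold z; field; lra).
  assert (Eb : b = y * P') by (unfold y; field; lra).
  assert (Hz : 0 <= z) by (unfold z; apply Rmult_le_pos; auto; apply Rlt_le, Rinv_0_lt_compat; auto).
  rewrite Ea, Eb in Hb.
  assert (Hy : 0 <= y) by (apply Rmult_le_reg_r with P'; nra).
  assert (U : y * m <= M * z).
  { apply Rmult_le_reg_r with P; auto. apply Rle_trans with (y * P'); nra. }
  assert (Lo : m * z <= y * M).
  { apply Rmult_le_reg_r with P; auto. apply Rle_trans with (y * P'); nra. }
  assert (HM : 0 < M) by lra.
  apply Rabs_le. unfold Rdiv. split.
  - apply Rmult_le_reg_r with (m * M); [nra|].
    replace (- ((M - m) * / m * z) * (m * M)) with (- (M - m) * M * z) by (field; lra).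
    assert (0 <= z * ((M - m) * (M - m))) by (apply Rmult_le_pos; nra).
    pose proof (Rmult_le_compat_l m _ _ (Rlt_le _ _ Hm) Lo). nra.
  - apply Rmult_le_reg_r with m; auto.
    replace ((M - m) * / m * z * m) with ((M - m) * z) by (field; lra). nra.
Qed.

Definition int_op (k : R -> R -> R) (a b : R) (f : R -> R) (x : R) : R :=
  RInt (fun y => k x y * f y) a b.

Definition lipschitz_in_first (k : R -> R -> R) :=
  forall a b x0, exists B d, 0 <= B /\ 0 < d /\
    forall x y, Rabs (x - x0) < d -> a <= y <= b -> Rabs (k x y - k x0 y) <= B * Rabs (x - x0).

Section IntegralOperator.

Variable k : R -> R -> R.
Hypothesis k_cont : forall x, continuous_R (k x).
Hypothesis k_lip : lipschitz_in_first k.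

Lemma ex_RInt_int_op a b (f : R -> R) x : continuous_R f -> ex_RInt (fun y => k x y * f y) a b.
Proof.
  intros Hf. apply ex_RInt_continuous_R. intros z. apply continuous_Rmult; [apply k_cont | apply Hf].
Qed.

Lemma int_op_continuous_le a b (f : R -> R) : a <= b -> continuous_R f ->
  continuous_R (int_op k a b f).
Proof.
  intros Hab Hf x0.
  destruct (bounded_on_segment f a b Hab) as (Mf & HMf & HMf'); [intros; apply Hf|].
  destruct (k_lip a b x0) as (B & d & HB & Hd & HBd).
  apply continuous_of_Reps. intros eps He.
  set (D := (b - a) * B * Mf + 1).
  assert (HD : 1 <= D) by (unfold D; pose proof (Rmult_le_pos (b - a) B); nra).
  exists (Rmin d (eps / D)). split; [apply Rmin_glb_lt; auto; apply Rdiv_lt_0_compat; lra|].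
  intros y Hy. pose proof (Rmin_l d (eps / D)). pose proof (Rmin_r d (eps / D)).
  unfold int_op. rewrite <- RInt_Rminus by (apply ex_RInt_int_op; auto).
  eapply Rle_lt_trans.
  - apply (abs_RInt_le_const _ a b (B * Rabs (y - x0) * Mf)); auto.
    + apply ex_RInt_Rminus; apply ex_RInt_int_op; auto.
    + intros t Ht. rewrite <- Rmult_minus_distr_r, Rabs_mult.
      apply Rmult_le_compat; try apply Rabs_pos; [apply HBd; auto; lra | apply HMf'; auto].
  - assert (Hy' : Rabs (y - x0) < eps / D) by lra.
    pose proof (Rabs_pos (y - x0)).
    apply Rle_lt_trans with (D * Rabs (y - x0)); [unfold D; nra|].
    replace eps with (D * (eps / D)) by (field; lra). apply Rmult_lt_compat_l; lra.
Qed.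

Lemma int_op_continuous a b (f : R -> R) : continuous_R f -> continuous_R (int_op k a b f).
Proof.
  intros Hf. destruct (Rle_dec a b); [apply int_op_continuous_le; auto|].
  intros x. assert (E : forall y, int_op k a b f y = - int_op k b a f y).
  { intros y. apply RInt_Rswap, ex_RInt_int_op, Hf. }
  apply (continuous_ext (fun y => - int_op k b a f y)); [intros; symmetry; apply E|].
  apply continuous_Ropp, int_op_continuous_le; auto; lra.
Qed.

End IntegralOperator.

(* [H_op G L u = int_op (odd_kernel G) 0 L u]: the convolution of [G] with the odd extension of [u]. *)
Definition odd_kernel (F : R -> R) (x y : R) := F (x - y) - F (x + y).

Lemma odd_kernel_continuous (F : R -> R) : continuous_R F -> forall x, continuous_R (odd_kernel F x).
Proof.
  intros Hc x y. unfold odd_kernel. apply continuous_Rminus.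
  - apply (continuous_Rcomp (fun t => x - t) F); auto with Rcont.
  - apply (continuous_Rcomp (fun t => x + t) F); auto with Rcont.
Qed.

Lemma odd_kernel_lipschitz (F : R -> R) :
  (forall x, ex_derive F x) -> continuous_R (Derive F) -> lipschitz_in_first (odd_kernel F).
Proof.
  intros Hd Hc a b x0.
  destruct (C1_locally_lipschitz F Hd Hc (Rabs x0 + 1 + Rabs a + Rabs b)) as (B & HB & HB').
  exists (2 * B), 1. split; [lra|]. split; [lra|].
  intros x y Hx Hy. unfold odd_kernel.
  assert (Hy' : Rabs y <= Rabs a + Rabs b).
  { apply Rabs_le. pose proof (Rabs_pos a); pose proof (Rabs_pos b).
    pose proof (Rle_abs a); pose proof (Rle_abs b); pose proof (Rle_abs (-a)); pose proof (Rle_abs (-b)).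
    rewrite Rabs_Ropp in *. lra. }
  assert (Hx' : Rabs x <= Rabs x0 + 1).
  { pose proof (Rabs_triang (x - x0) x0). replace (x - x0 + x0) with x in H by ring. lra. }
  pose proof (Rabs_pos x0). pose proof (Rabs_pos a). pose proof (Rabs_pos b).
  assert (E1 : Rabs (F (x - y) - F (x0 - y)) <= B * Rabs (x - x0)).
  { replace (x - x0) with ((x - y) - (x0 - y)) by ring.
    pose proof (Rabs_sub_le x y). pose proof (Rabs_sub_le x0 y). apply HB'; lra. }
  assert (E2 : Rabs (F (x + y) - F (x0 + y)) <= B * Rabs (x - x0)).
  { replace (x - x0) with ((x + y) - (x0 + y)) by ring.
    pose proof (Rabs_triang x y). pose proof (Rabs_triang x0 y). apply HB'; lra. }
  replace (F (x - y) - F (x + y) - (F (x0 - y) - F (x0 + y))) with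
    ((F (x - y) - F (x0 - y)) - (F (x + y) - F (x0 + y))) by ring.
  pose proof (Rabs_sub_le (F (x - y) - F (x0 - y)) (F (x + y) - F (x0 + y))). lra.
Qed.

(** * The kernel *)

Section Kernel.

Variable G : R -> R.
Hypothesis hG : kernel_hyp G.

Lemma G_nonneg x : 0 <= G x.
Proof. apply hG. Qed.

Lemma G_even x : G (- x) = G x.
Proof. destruct hG as (_&_&_&_&_&_&(g&Hg&_)&_). rewrite !Hg, Rabs_Ropp. reflexivity. Qed.

Lemma G_ex_derive x : ex_derive G x.
Proof. apply hG. Qed.

Lemma DG_ex_derive x : ex_derive (Derive G) x.
Proof. apply hG. Qed.

Lemma G_continuous : continuous_R G.
Proof. intros x. apply ex_derive_continuous_R, G_ex_derive. Qed.

Lemma DG_continuous : continuous_R (Derive G).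
Proof. intros x. apply ex_derive_continuous_R, DG_ex_derive. Qed.

Lemma D2G_continuous : continuous_R (Derive (Derive G)).
Proof. intros x. apply hG. Qed.

Lemma D2G_0_neg : Derive (Derive G) 0 < 0.
Proof. destruct hG as (_&_&_&_&_&_&(g&_&_&H&_)&_). exact H. Qed.

Lemma G_is_RInt_gen : is_RInt_gen G (Rbar_locally m_infty) (Rbar_locally p_infty) 1.
Proof. apply hG. Qed.

Lemma G_is_derive x : is_derive G x (Derive G x).
Proof. apply Derive_correct, G_ex_derive. Qed.

Lemma DG_odd x : Derive G (- x) = - Derive G x.
Proof.
  assert (E : Derive (fun t => G (- t)) x = - Derive G (- x)).
  { apply is_derive_unique.
    replace (- Derive G (- x)) with (scal (-1) (Derive G (- x)))
      by (unfold scal; simpl; unfold mult; simpl; ring).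
    apply (is_derive_comp G (fun t => - t)); [apply G_is_derive | auto_derive; auto]. }
  rewrite (Derive_ext (fun t => G (- t)) G x) in E by apply G_even. lra.
Qed.

Lemma DG_0 : Derive G 0 = 0.
Proof. pose proof (DG_odd 0). rewrite Ropp_0 in H. lra. Qed.

Lemma DG_neg t : 0 < t -> Derive G t < 0.
Proof.
  intros Ht. destruct hG as (_&_&_&_&_&_&(g&Hg&Hd&_)&_).
  rewrite (Derive_ext_loc G g); [apply Hd, Ht|].
  assert (Hp : 0 < t / 2) by lra.
  exists (mkposreal _ Hp). intros s Hs.
  assert (Hs' : Rabs (s - t) < t / 2) by exact Hs. apply Rabs_def2 in Hs'.
  rewrite Hg, Rabs_right by lra. reflexivity.
Qed.

Lemma DG_is_derive x : is_derive (Derive G) x (Derive (Derive G) x).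
Proof. apply Derive_correct, DG_ex_derive. Qed.

Lemma G_decreasing a b : 0 <= a -> a <= b -> G b <= G a.
Proof.
  intros Ha Hab.
  destruct (MVT_Rle G (Derive G) a b Hab (fun x _ => G_is_derive x)) as (c & Hc & E).
  destruct (Req_dec c 0) as [->|Hc0].
  - rewrite DG_0 in E. lra.
  - pose proof (DG_neg c ltac:(lra)). nra.
Qed.

Lemma G_Rabs x : G x = G (Rabs x).
Proof.
  destruct (Rle_dec 0 x).
  - rewrite Rabs_right; auto; lra.
  - rewrite Rabs_left, G_even by lra. reflexivity.
Qed.

(* [g''(0) < 0] gives the lower bound near 0, [g' < 0] away from 0. *)
Lemma DG_linear_bounds L : 0 < L ->
  exists c0 C0, 0 < c0 /\ 0 < C0 /\
    forall t, 0 <= t <= 2 * L -> c0 * t <= - Derive G t <= C0 * t.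
Proof.
  intros HL.
  set (d2 := Derive (Derive G)). pose proof D2G_0_neg as Hn. fold d2 in Hn.
  destruct (continuous_Reps d2 0 (D2G_continuous 0) (- d2 0 / 2)) as (al & Hal & Hc); [lra|].
  assert (Hnear : forall t, 0 <= t < al -> (- d2 0 / 2) * t <= - Derive G t).
  { intros t Ht.
    destruct (MVT_Rle (Derive G) d2 0 t) as (c & Hc' & E); [lra | intros; apply DG_is_derive |].
    rewrite DG_0 in E.
    assert (Hd : Rabs (d2 c - d2 0) < - d2 0 / 2) by (apply Hc; rewrite Rminus_0_r, Rabs_right; lra).
    apply Rabs_def2 in Hd. nra. }
  set (be := Rmin (al / 2) L).
  assert (Hbe : 0 < be) by (unfold be; apply Rmin_glb_lt; lra).
  assert (Hbe2 : be <= L) by apply Rmin_r.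
  assert (Hbe3 : be < al) by (unfold be; pose proof (Rmin_l (al / 2) L); lra).
  destruct (continuity_ab_min (fun t => - Derive G t) be (2 * L)) as (mx & Hmx & Hmxb); [lra| |].
  { intros c _. apply continuous_continuity_pt, continuous_Ropp, DG_continuous. }
  set (m := - Derive G mx).
  assert (Hm : 0 < m) by (unfold m; pose proof (DG_neg mx ltac:(lra)); lra).
  destruct (bounded_on_segment d2 0 (2 * L)) as (M & HM & HMb); [lra | intros; apply D2G_continuous |].
  exists (Rmin (- d2 0 / 2) (m / (2 * L))), (M + 1).
  split; [apply Rmin_glb_lt; [lra | apply Rdiv_lt_0_compat; lra]|].
  split; [lra|].
  intros t Ht. split.
  - pose proof (Rmin_l (- d2 0 / 2) (m / (2 * L))). pose proof (Rmin_r (- d2 0 / 2) (m / (2 * L))).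
    destruct (Rle_dec t be).
    + pose proof (Hnear t ltac:(lra)). nra.
    + pose proof (Hmx t ltac:(lra)).
      assert (m / (2 * L) * t <= m).
      { apply Rle_trans with (m / (2 * L) * (2 * L)); [apply Rmult_le_compat_l; [|lra]|].
        apply Rlt_le, Rdiv_lt_0_compat; lra. right; field; lra. }
      fold m in H1. nra.
  - destruct (MVT_Rle (Derive G) d2 0 t) as (c & Hc' & E); [lra | intros; apply DG_is_derive |].
    rewrite DG_0 in E. pose proof (HMb c ltac:(lra)) as Hb. apply Rabs_le_between in Hb. nra.
Qed.

(* [odd_kernel G x y = G |x - y| - G (x + y)]: integrate the bounds on [- G'] over [[|x - y|, x + y]],
   using [(x + y)^2 - (x - y)^2 = 4 x y]. *)
Definition kernel_squeeze (L c C : R) := 0 < c /\ 0 < C /\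
  forall x y, 0 <= x <= L -> 0 <= y <= L -> c * x * y <= odd_kernel G x y <= C * x * y.

Lemma odd_kernel_squeeze L : 0 < L -> exists c C, kernel_squeeze L c C.
Proof.
  intros HL.
  destruct (DG_linear_bounds L HL) as (c0 & C0 & Hc0 & HC0 & Hb).
  exists (2 * c0), (2 * C0). split; [lra|]. split; [lra|].
  intros x y Hx Hy. unfold odd_kernel.
  set (a := Rabs (x - y)). set (b := x + y).
  assert (Ha : 0 <= a) by apply Rabs_pos.
  assert (Hab : a <= b) by (unfold a, b; apply Rabs_le; lra).
  assert (E : a * a = (x - y) * (x - y)).
  { unfold a. rewrite <- Rabs_mult. apply Rabs_right, Rle_ge, Rle_0_sqr. }
  rewrite G_Rabs. fold a.
  assert (MVT_quad : forall k, exists s, a <= s <= b /\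
    G b + k / 2 * (b * b) - (G a + k / 2 * (a * a)) = (Derive G s + k * s) * (b - a)).
  { intros k. apply (MVT_Rle (fun s => G s + k / 2 * (s * s))); auto.
    intros s _. apply (is_derive_plus G); [apply G_is_derive | auto_derive; [auto | field]]. }
  destruct (MVT_quad c0) as (s & Hs & E1). destruct (MVT_quad C0) as (s' & Hs' & E2).
  pose proof (Hb s ltac:(unfold b in *; lra)). pose proof (Hb s' ltac:(unfold b in *; lra)).
  assert ((Derive G s + c0 * s) * (b - a) <= 0) by (apply Rmult_le_0_r; lra).
  assert (0 <= (Derive G s' + C0 * s') * (b - a)) by (apply Rmult_le_pos; lra).
  unfold b in *. split; nra.
Qed.

Lemma odd_kernel_nonneg x y : 0 <= x -> 0 <= y -> 0 <= odd_kernel G x y.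
Proof.
  intros Hx Hy. unfold odd_kernel. rewrite G_Rabs.
  assert (Rabs (x - y) <= x + y) by (apply Rabs_le; lra).
  pose proof (G_decreasing (Rabs (x - y)) (x + y) (Rabs_pos _) H). lra.
Qed.

Lemma odd_kernel_sym x y : odd_kernel G x y = odd_kernel G y x.
Proof.
  unfold odd_kernel. rewrite <- (G_even (x - y)), Rplus_comm.
  replace (- (x - y)) with (y - x) by ring. reflexivity.
Qed.

Lemma odd_kernel_G_continuous x : continuous_R (odd_kernel G x).
Proof. apply odd_kernel_continuous, G_continuous. Qed.

Lemma odd_kernel_G_lipschitz : lipschitz_in_first (odd_kernel G).
Proof. apply odd_kernel_lipschitz; [apply G_ex_derive | apply DG_continuous]. Qed.

Lemma odd_kernel_DG_lipschitz : lipschitz_in_first (odd_kernel (Derive G)).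
Proof. apply odd_kernel_lipschitz; [apply DG_ex_derive | apply D2G_continuous]. Qed.

Lemma ex_RInt_H_op L (f : R -> R) x : continuous_R f ->
  ex_RInt (fun y => odd_kernel G x y * f y) 0 L.
Proof. apply ex_RInt_int_op, odd_kernel_G_continuous. Qed.

Lemma H_op_continuous L (f : R -> R) : continuous_R f -> continuous_R (H_op G L f).
Proof.
  intros Hf. change (continuous_R (int_op (odd_kernel G) 0 L f)).
  apply int_op_continuous; auto using odd_kernel_G_continuous, odd_kernel_G_lipschitz.
Qed.

Lemma H_op_ext L (f g : R -> R) x : 0 <= L -> (forall y, 0 <= y <= L -> f y = g y) ->
  H_op G L f x = H_op G L g x.
Proof. intros HL E. apply RInt_ext_le; auto. intros y Hy. rewrite E; auto. Qed.

Lemma H_op_scal L (f : R -> R) c x : continuous_R f ->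
  H_op G L (fun y => c * f y) x = c * H_op G L f x.
Proof.
  intros Hf. unfold H_op. rewrite <- RInt_Rscal by (apply ex_RInt_H_op; auto).
  apply RInt_ext. intros; simpl; ring.
Qed.

Lemma H_op_minus L (f g : R -> R) x : continuous_R f -> continuous_R g ->
  H_op G L (fun y => f y - g y) x = H_op G L f x - H_op G L g x.
Proof.
  intros Hf Hg. unfold H_op. rewrite <- RInt_Rminus by (apply ex_RInt_H_op; auto).
  apply RInt_ext. intros; simpl; ring.
Qed.

Lemma H_op_le L (f g : R -> R) x : 0 <= L -> continuous_R f -> continuous_R g ->
  (forall y, 0 <= y <= L -> f y <= g y) -> 0 <= x -> H_op G L f x <= H_op G L g x.
Proof.
  intros HL Hf Hg Hfg Hx. apply RInt_Rle; auto; try (apply ex_RInt_H_op; auto).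
  intros y Hy. apply Rmult_le_compat_l; [apply odd_kernel_nonneg; lra | auto].
Qed.

Lemma H_op_nonneg L (f : R -> R) x : 0 <= L -> continuous_R f ->
  (forall y, 0 <= y <= L -> 0 <= f y) -> 0 <= x -> 0 <= H_op G L f x.
Proof.
  intros HL Hf Hpos Hx. apply RInt_Rnonneg; auto; [apply ex_RInt_H_op; auto|].
  intros y Hy. apply Rmult_le_pos; [apply odd_kernel_nonneg; lra | auto].
Qed.

Lemma H_op_at_0 L (v : R -> R) : H_op G L v 0 = 0.
Proof.
  unfold H_op. rewrite (RInt_ext _ (fun _ => 0)), RInt_Rconst; [ring|].
  intros y _. rewrite Rminus_0_l, Rplus_0_l, G_even. simpl; ring.
Qed.

Lemma H_op_is_derive L (v : R -> R) x : continuous_R v ->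
  is_derive (H_op G L v) x (int_op (odd_kernel (Derive G)) 0 L v x).
Proof.
  intros Hv. unfold H_op, int_op.
  assert (Dk : forall u t, Derive (fun z => (G (z - t) - G (z + t)) * v t) u
                          = odd_kernel (Derive G) u t * v t).
  { intros u t. apply is_derive_unique. unfold odd_kernel. auto_derive.
    - repeat split; apply G_ex_derive.
    - change (fun x => G x) with G. replace (u + - t) with (u - t) by ring. ring. }
  rewrite (RInt_ext _ (fun t => Derive (fun u => (G (u - t) - G (u + t)) * v t) x))
    by (intros; symmetry; apply Dk).
  apply (is_derive_RInt_param (fun u t => (G (u - t) - G (u + t)) * v t) 0 L x).
  - exists (mkposreal 1 Rlt_0_1). intros y _ t _.
    auto_derive. repeat split; apply G_ex_derive.
  - intros t _.
    apply (continuity_2d_pt_ext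
      (fun u w => (Derive G (1 * u + (-1) * w) - Derive G (1 * u + 1 * w)) * v (0 * u + 1 * w))).
    { intros u w. rewrite Dk. unfold odd_kernel. repeat (f_equal; try ring). }
    pose proof DG_continuous.
    apply continuity_2d_pt_mult; [apply continuity_2d_pt_minus|]; apply continuity_2d_pt_lin; auto.
  - exists (mkposreal 1 Rlt_0_1). intros y _. apply (ex_RInt_H_op L v y Hv).
Qed.

Lemma H_op_C1 L (v : R -> R) : continuous_R v -> C1_on 0 L (H_op G L v).
Proof.
  intros Hv.
  assert (Hc : continuous_R (int_op (odd_kernel (Derive G)) 0 L v)).
  { apply int_op_continuous; auto using odd_kernel_DG_lipschitz.
    intros; apply odd_kernel_continuous, DG_continuous. }
  exists (int_op (odd_kernel (Derive G)) 0 L v). split; [apply continuous_R_cont_on, Hc|].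
  intros x Hx.
  assert (Hi : is_RInt (int_op (odd_kernel (Derive G)) 0 L v) 0 x
                       (minus (H_op G L v x) (H_op G L v 0))).
  { apply (@is_RInt_derive R_CompleteNormedModule); intros; [apply H_op_is_derive, Hv | apply Hc]. }
  apply (@is_RInt_unique R_CompleteNormedModule) in Hi. rewrite Hi.
  unfold minus, plus, opp; simpl. ring.
Qed.

Definition moment (L : R) (f : R -> R) : R := RInt (fun y => y * f y) 0 L.

Lemma ex_RInt_moment L (f : R -> R) : continuous_R f -> ex_RInt (fun y => y * f y) 0 L.
Proof. intros Hf. apply ex_RInt_continuous_R. intros z. auto with Rcont. Qed.

Lemma moment_le L (f g : R -> R) : 0 <= L -> continuous_R f -> continuous_R g ->
  (forall y, 0 <= y <= L -> f y <= g y) -> moment L f <= moment L g.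
Proof.
  intros HL Hf Hg Hfg. apply RInt_Rle; auto; try (apply ex_RInt_moment; auto).
  intros y Hy. apply Rmult_le_compat_l; [lra | auto].
Qed.

Lemma moment_nonneg L (f : R -> R) : 0 <= L -> continuous_R f ->
  (forall y, 0 <= y <= L -> 0 <= f y) -> 0 <= moment L f.
Proof.
  intros HL Hf Hp. apply RInt_Rnonneg; auto; [apply ex_RInt_moment; auto|].
  intros y Hy. apply Rmult_le_pos; [lra | auto].
Qed.

Lemma moment_scal L (f : R -> R) c : continuous_R f -> moment L (fun y => c * f y) = c * moment L f.
Proof.
  intros Hf. unfold moment. rewrite <- RInt_Rscal by (apply ex_RInt_moment; auto).
  apply RInt_ext; intros; simpl; ring.
Qed.

Lemma moment_minus L (f g : R -> R) : continuous_R f -> continuous_R g ->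
  moment L (fun y => f y - g y) = moment L f - moment L g.
Proof.
  intros Hf Hg. unfold moment. rewrite <- RInt_Rminus by (apply ex_RInt_moment; auto).
  apply RInt_ext; intros; simpl; ring.
Qed.

Lemma moment_id_pos L : 0 < L -> 0 < moment L (fun y => y).
Proof.
  intros HL. apply RInt_gt_0; auto; [intros x Hx; apply Rmult_lt_0_compat; lra|].
  intros x _. auto with Rcont.
Qed.

Lemma H_op_squeeze L c C (f : R -> R) x : kernel_squeeze L c C -> continuous_R f ->
  (forall y, 0 <= y <= L -> 0 <= f y) -> 0 <= x <= L ->
  c * x * moment L f <= H_op G L f x <= C * x * moment L f.
Proof.
  intros (Hc & HC & Hb) Hf Hp Hx. unfold moment.
  assert (HL : 0 <= L) by lra.
  assert (E1 := ex_RInt_moment L f Hf). assert (E2 := ex_RInt_H_op L f x Hf).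
  rewrite <- !RInt_Rscal by auto. split; apply RInt_Rle; auto using ex_RInt_Rscal;
    intros y Hy; destruct (Hb x y Hx Hy); pose proof (Hp y Hy).
  - replace (c * x * (y * f y)) with ((c * x * y) * f y) by ring. apply Rmult_le_compat_r; auto.
  - replace (C * x * (y * f y)) with ((C * x * y) * f y) by ring. apply Rmult_le_compat_r; auto.
Qed.

(** * Existence of a positive eigenfunction by power iteration *)

Section PowerIteration.

Variables L c C : R.
Hypothesis HL : 0 < L.
Hypothesis Hsq : kernel_squeeze L c C.

Fixpoint iterate (n : nat) : R -> R :=
  match n with O => fun x => x | S n => H_op G L (iterate n) end.

Let Q := moment L (fun y => y).
Let P n := moment L (iterate n).
Let q := 1 - c / C.

Lemma squeeze_constants : 0 < c /\ c <= C.
Proof.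
  destruct Hsq as (Hc & HC & Hb). destruct (Hb L L) as [H1 H2]; [lra | lra |].
  split; auto. apply Rmult_le_reg_r with (L * L); nra.
Qed.

Lemma contraction_factor : 0 <= q < 1.
Proof.
  destruct squeeze_constants as [Hc HcC]. pose proof (Rdiv_lt_0_compat c C Hc ltac:(lra)).
  assert (c / C <= 1)
    by (apply Rmult_le_reg_r with C; [lra|]; unfold Rdiv; rewrite Rmult_assoc, Rinv_l; lra).
  unfold q; lra.
Qed.

Lemma iterate_continuous n : continuous_R (iterate n).
Proof. induction n; [intros x; apply continuous_Rid | apply H_op_continuous; auto]. Qed.

Lemma iterate_nonneg n y : 0 <= y <= L -> 0 <= iterate n y.
Proof.
  revert y; induction n; intros y Hy; [simpl; lra|].
  apply H_op_nonneg; auto using iterate_continuous; lra.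
Qed.

Lemma iterate_squeeze n x : 0 <= x <= L -> c * x * P n <= iterate (S n) x <= C * x * P n.
Proof. intros Hx. apply H_op_squeeze; auto using iterate_continuous, iterate_nonneg. Qed.

Lemma moment_iterate_pos n : 0 < P n.
Proof.
  destruct squeeze_constants as [Hc _]. pose proof (moment_id_pos L HL).
  induction n; auto.
  assert (c * P n * Q <= P (S n)).
  { unfold Q. rewrite <- moment_scal by (intros x; apply continuous_Rid).
    apply moment_le; [lra | intros x; auto with Rcont | apply iterate_continuous |].
    intros y Hy. pose proof (iterate_squeeze n y Hy). lra. }
  assert (0 < c * P n * Q) by (repeat apply Rmult_lt_0_compat; auto). lra.
Qed.

Definition bracket n m M :=
  forall x, 0 <= x <= L -> m * iterate n x <= iterate (S n) x <= M * iterate n x.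

Lemma bracket_0 : bracket 0 (c * Q) (C * Q).
Proof. intros x Hx. pose proof (iterate_squeeze 0 x Hx). change (P 0) with Q in H. simpl in *. nra. Qed.

Lemma bracket_succ n m M : bracket n m M -> bracket (S n) m M.
Proof.
  intros Hb x Hx. pose proof (iterate_continuous n). pose proof (iterate_continuous (S n)).
  change (iterate (S (S n)) x) with (H_op G L (iterate (S n)) x).
  change (iterate (S n) x) with (H_op G L (iterate n) x).
  rewrite <- !H_op_scal by auto.
  split; apply H_op_le; auto; try lra; try (intros z; solve [auto with Rcont]);
    intros y Hy; apply Hb; auto.
Qed.

Lemma bracket_later n m M k : bracket n m M -> (n <= k)%nat -> bracket k m M.
Proof. intros Hb Hk. induction Hk; auto using bracket_succ. Qed.

Lemma moment_bracket n m M : bracket n m M -> m * P n <= P (S n) <= M * P n.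
Proof.
  intros Hb. pose proof (iterate_continuous n). pose proof (iterate_continuous (S n)).
  unfold P. rewrite <- !moment_scal by auto.
  split; apply moment_le; auto; try lra; try (intros z; solve [auto with Rcont]);
    intros y Hy; apply Hb; auto.
Qed.

(* [H_op] maps any nonnegative [h] above a fixed fraction of [f_{n+1}]: this is what makes the
   brackets shrink geometrically. *)
Lemma H_op_above_iterate n (h : R -> R) x : continuous_R h ->
  (forall y, 0 <= y <= L -> 0 <= h y) -> 0 <= x <= L ->
  c / C * (moment L h / P n) * iterate (S n) x <= H_op G L h x.
Proof.
  intros Hh Hpos Hx. destruct squeeze_constants as [Hc HcC].
  pose proof (moment_iterate_pos n). pose proof (moment_nonneg L h ltac:(lra) Hh Hpos).
  destruct (H_op_squeeze L c C h x Hsq Hh Hpos Hx) as [Hlow _].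
  destruct (iterate_squeeze n x Hx) as [_ Hup].
  apply Rle_trans with (c / C * (moment L h / P n) * (C * x * P n)).
  2: { apply Rle_trans with (c * x * moment L h); [right; field; lra | exact Hlow]. }
  apply Rmult_le_compat_l; auto.
  apply Rmult_le_pos; [apply Rlt_le, Rdiv_lt_0_compat | apply Rdiv_le_0_compat]; lra.
Qed.

Lemma bracket_contract n m M : bracket n m M -> m <= M ->
  exists m' M', m <= m' /\ m' <= M' /\ M' <= M /\ M' - m' = q * (M - m) /\ bracket (S n) m' M'.
Proof.
  intros Hb HmM. destruct squeeze_constants as [Hc HcC].
  pose proof (iterate_continuous n) as C0. pose proof (iterate_continuous (S n)) as C1.
  pose proof (moment_iterate_pos n) as HP.
  set (lo := fun y => iterate (S n) y - m * iterate n y).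
  set (hi := fun y => M * iterate n y - iterate (S n) y).
  assert (Clo : continuous_R lo) by (intros z; unfold lo; auto with Rcont).
  assert (Chi : continuous_R hi) by (intros z; unfold hi; auto with Rcont).
  assert (Plo : forall y, 0 <= y <= L -> 0 <= lo y) by (intros y Hy; destruct (Hb y Hy); unfold lo; lra).
  assert (Phi : forall y, 0 <= y <= L -> 0 <= hi y) by (intros y Hy; destruct (Hb y Hy); unfold hi; lra).
  set (A := c / C * (moment L lo / P n)). set (B := c / C * (moment L hi / P n)).
  pose proof (moment_nonneg L lo ltac:(lra) Clo Plo). pose proof (moment_nonneg L hi ltac:(lra) Chi Phi).
  assert (HA : 0 <= A)
    by (apply Rmult_le_pos; [apply Rlt_le, Rdiv_lt_0_compat | apply Rdiv_le_0_compat]; lra).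
  assert (HB : 0 <= B)
    by (apply Rmult_le_pos; [apply Rlt_le, Rdiv_lt_0_compat | apply Rdiv_le_0_compat]; lra).
  assert (HAB : A + B = c / C * (M - m)).
  { unfold A, B, lo, hi. rewrite !moment_minus, !moment_scal by (auto; intros z; auto with Rcont).
    fold (P n) (P (S n)). field. lra. }
  exists (m + A), (M - B).
  assert (q * (M - m) = M - m - (A + B)) by (rewrite HAB; unfold q; ring).
  assert (0 <= q * (M - m)) by (apply Rmult_le_pos; [apply contraction_factor | lra]).
  split; [lra|]. split; [lra|]. split; [lra|]. split; [lra|].
  intros x Hx.
  pose proof (H_op_above_iterate n lo x Clo Plo Hx) as Klo.
  pose proof (H_op_above_iterate n hi x Chi Phi Hx) as Khi.
  fold A in Klo. fold B in Khi.
  assert (Elo : H_op G L lo x = iterate (S (S n)) x - m * iterate (S n) x).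
  { unfold lo. rewrite H_op_minus, H_op_scal by (auto; intros z; auto with Rcont). reflexivity. }
  assert (Ehi : H_op G L hi x = M * iterate (S n) x - iterate (S (S n)) x).
  { unfold hi. rewrite H_op_minus, H_op_scal by (auto; intros z; auto with Rcont). reflexivity. }
  rewrite Rmult_plus_distr_r, Rmult_minus_distr_r. split; lra.
Qed.

Lemma bracket_exists n : exists m M, c * Q <= m /\ m <= M /\ M <= C * Q /\
  M - m <= q ^ n * (C * Q - c * Q) /\ bracket n m M.
Proof.
  destruct squeeze_constants as [Hc HcC]. assert (HQ : 0 < Q) by (apply moment_id_pos, HL).
  induction n as [|k IH].
  - exists (c * Q), (C * Q). simpl.
    split; [lra|]. split; [nra|]. split; [lra|]. split; [lra | apply bracket_0].
  - destruct IH as (m & M & H1 & H2 & H3 & H4 & H5).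
    destruct (bracket_contract k m M H5 H2) as (m' & M' & K1 & K2 & K3 & K4 & K5).
    exists m', M'. split; [lra|]. split; [lra|]. split; [lra|]. split; [|exact K5].
    rewrite K4. simpl. rewrite Rmult_assoc.
    apply Rmult_le_compat_l; [apply contraction_factor | lra].
Qed.

Definition ratio n := P (S n) / P n.

Lemma ratio_bracket n m M : bracket n m M -> m <= ratio n <= M.
Proof.
  intros Hb. pose proof (moment_iterate_pos n). destruct (moment_bracket n m M Hb).
  unfold ratio. split; [apply Rmult_le_reg_r with (P n) | apply Rmult_le_reg_r with (P n)];
    auto; unfold Rdiv; rewrite Rmult_assoc, Rinv_l; lra.
Qed.

Definition eigval := real (Lim_seq ratio).

Lemma ratio_is_lim : is_lim_seq ratio eigval.
Proof.
  apply is_lim_seq_Lim_seq_Cauchy. intros eps He.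
  pose proof contraction_factor. destruct squeeze_constants as [Hc HcC].
  set (D := C * Q - c * Q).
  assert (HQ : 0 < Q) by (apply moment_id_pos, HL).
  assert (HD : 0 <= D) by (unfold D; nra).
  destruct (pow_small q contraction_factor (eps / (D + 1))) as (N & HN); [apply Rdiv_lt_0_compat; lra|].
  destruct (bracket_exists N) as (m & M & _ & _ & _ & HmM & Hb).
  exists N. intros n k Hn Hk.
  destruct (ratio_bracket n m M (bracket_later N m M n Hb Hn)).
  destruct (ratio_bracket k m M (bracket_later N m M k Hb Hk)).
  assert (q ^ N * D <= eps / (D + 1) * D) by (apply Rmult_le_compat_r; lra).
  assert (eps / (D + 1) * D < eps).
  { replace eps with (eps / (D + 1) * (D + 1)) at 2 by (field; lra).
    apply Rmult_lt_compat_l; [apply Rdiv_lt_0_compat|]; lra. }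
  fold D in HmM. apply Rabs_def1; lra.
Qed.

Lemma eigval_ge : c * Q <= eigval.
Proof.
  apply (is_lim_seq_ge_const _ _ _ 0 ratio_is_lim). intros k _.
  apply (ratio_bracket k (c * Q) (C * Q)), (bracket_later 0); auto using bracket_0. lia.
Qed.

Definition normalized n x := iterate n x / P n.

Lemma normalized_continuous n : continuous_R (normalized n).
Proof. intros x. unfold normalized, Rdiv. pose proof (iterate_continuous n). auto with Rcont. Qed.

Lemma normalized_bounds n x : 0 <= x <= L ->
  c / (C * Q) * x <= normalized n x <= C / (c * Q) * x.
Proof.
  intros Hx. destruct squeeze_constants as [Hc HcC]. assert (HQ : 0 < Q) by (apply moment_id_pos, HL).
  unfold normalized. destruct n as [|n].
  - change (iterate 0 x / P 0) with (x / Q). replace (x / Q) with (1 / Q * x) by (field; lra).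
    assert (c / (C * Q) <= 1 / Q /\ 1 / Q <= C / (c * Q)) as [H1 H2].
    { split; unfold Rdiv; rewrite ?Rinv_mult, <- ?Rmult_assoc; apply Rmult_le_compat_r;
        try (apply Rlt_le, Rinv_0_lt_compat; lra);
        [apply Rmult_le_reg_r with C | apply Rmult_le_reg_r with c]; try lra;
        rewrite Rmult_assoc, Rinv_l; lra. }
    split; apply Rmult_le_compat_r; lra.
  - pose proof (moment_iterate_pos n) as HP. pose proof (moment_iterate_pos (S n)) as HP'.
    destruct (moment_bracket n _ _ (bracket_later 0 _ _ n bracket_0 ltac:(lia))).
    destruct (iterate_squeeze n x Hx).
    split; apply Rmult_le_reg_r with (P (S n)); auto;
      unfold Rdiv; rewrite (Rmult_assoc (iterate (S n) x)), Rinv_l, Rmult_1_r by lra.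
    + apply Rle_trans with (c * x * P n); auto.
      apply Rle_trans with (c * / (C * Q) * x * (C * Q * P n)); [|right; field; lra].
      apply Rmult_le_compat_l; [apply Rmult_le_pos; [apply Rmult_le_pos|]|]; try lra.
      apply Rlt_le, Rinv_0_lt_compat, Rmult_lt_0_compat; lra.
    + apply Rle_trans with (C * x * P n); auto.
      apply Rle_trans with (C * / (c * Q) * x * (c * Q * P n)); [right; field; lra|].
      apply Rmult_le_compat_l; [apply Rmult_le_pos; [apply Rmult_le_pos|]|]; try lra.
      apply Rlt_le, Rinv_0_lt_compat, Rmult_lt_0_compat; lra.
Qed.

Let E0 := (C * Q - c * Q) / (c * Q) * (C / (c * Q) * L).

Lemma normalized_step n x : 0 <= x <= L ->
  Rabs (normalized (S n) x - normalized n x) <= E0 * q ^ n.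
Proof.
  intros Hx. destruct squeeze_constants as [Hc HcC]. assert (HQ : 0 < Q) by (apply moment_id_pos, HL).
  destruct (bracket_exists n) as (m & M & Hm & HmM & HM & Hd & Hb).
  assert (Hm0 : 0 < m) by nra.
  eapply Rle_trans.
  { apply (normalized_ratio_close m M (P n) (P (S n)) (iterate n x) (iterate (S n) x));
      auto using moment_iterate_pos, iterate_nonneg, moment_bracket. }
  change (iterate n x / P n) with (normalized n x).
  destruct (normalized_bounds n x Hx) as [Blo Bup].
  assert (0 <= c / (C * Q) * x) by (apply Rmult_le_pos; [apply Rlt_le, Rdiv_lt_0_compat; nra | lra]).
  assert (normalized n x <= C / (c * Q) * L).
  { apply Rle_trans with (C / (c * Q) * x); auto.
    apply Rmult_le_compat_l; [apply Rlt_le, Rdiv_lt_0_compat; nra | lra]. }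
  assert ((M - m) / m <= q ^ n * (C * Q - c * Q) / (c * Q)).
  { unfold Rdiv. apply Rle_trans with ((M - m) * / (c * Q)).
    - apply Rmult_le_compat_l; [lra|]. apply Rinv_le_contravar; nra.
    - apply Rmult_le_compat_r; [apply Rlt_le, Rinv_0_lt_compat; nra | lra]. }
  assert (0 <= (M - m) / m) by (apply Rdiv_le_0_compat; lra).
  apply Rle_trans with (q ^ n * (C * Q - c * Q) / (c * Q) * (C / (c * Q) * L)).
  - apply Rmult_le_compat; auto; lra.
  - right. unfold E0. field. nra.
Qed.

Definition eigenfunction x := pointwise_limit normalized (clamp L x).

Lemma eigenfunction_continuous : continuous_R eigenfunction.
Proof.
  apply (pointwise_limit_clamp_continuous normalized L E0 q);
    auto using contraction_factor, normalized_step, normalized_continuous; lra.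
Qed.

Lemma eigenfunction_is_lim x : 0 <= x <= L ->
  is_lim_seq (fun n => normalized n x) (eigenfunction x).
Proof.
  intros Hx. unfold eigenfunction. rewrite clamp_id by auto.
  apply (pointwise_limit_is_lim normalized L E0 q); auto using contraction_factor, normalized_step, Rlt_le.
Qed.

Lemma eigenfunction_close n x : 0 <= x <= L ->
  Rabs (eigenfunction x - normalized n x) <= E0 * q ^ n / (1 - q).
Proof.
  intros Hx. unfold eigenfunction. rewrite clamp_id by auto.
  apply (pointwise_limit_close normalized L E0 q); auto using contraction_factor, normalized_step, Rlt_le.
Qed.

Lemma eigenfunction_bounds x : 0 <= x <= L ->
  c / (C * Q) * x <= eigenfunction x <= C / (c * Q) * x.
Proof.
  intros Hx. apply (is_lim_seq_between _ _ _ _ 0 (eigenfunction_is_lim x Hx)).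
  intros k _. apply normalized_bounds, Hx.
Qed.

Lemma H_op_normalized n x : H_op G L (normalized n) x = ratio n * normalized (S n) x.
Proof.
  pose proof (moment_iterate_pos n). pose proof (moment_iterate_pos (S n)).
  rewrite (H_op_ext L _ (fun y => / P n * iterate n y)); [| lra | intros; unfold normalized, Rdiv; ring].
  rewrite H_op_scal by apply iterate_continuous.
  change (H_op G L (iterate n) x) with (iterate (S n) x).
  unfold ratio, normalized. field. lra.
Qed.

Lemma H_op_abs_le (f : R -> R) e x : continuous_R f -> 0 <= x <= L ->
  (forall y, 0 <= y <= L -> Rabs (f y) <= e) -> Rabs (H_op G L f x) <= L * (C * L * L * e).
Proof.
  intros Hf Hx Hb. destruct Hsq as (_ & HC & Hk).
  replace (L * (C * L * L * e)) with ((L - 0) * (C * L * L * e)) by ring.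
  apply abs_RInt_le_const; [lra | apply ex_RInt_H_op; auto |].
  intros y Hy. pose proof (odd_kernel_nonneg x y ltac:(lra) ltac:(lra)). destruct (Hk x y Hx Hy).
  change (Rabs (odd_kernel G x y * f y) <= C * L * L * e).
  rewrite Rabs_mult, (Rabs_right (odd_kernel G x y)) by lra.
  apply Rmult_le_compat; [lra | apply Rabs_pos | | apply Hb; auto].
  apply Rle_trans with (C * x * y); [lra|]. rewrite !Rmult_assoc.
  apply Rmult_le_compat_l; [lra|]. apply Rmult_le_compat; lra.
Qed.

Lemma eigen_equation x : 0 <= x <= L -> H_op G L eigenfunction x = eigval * eigenfunction x.
Proof.
  intros Hx. pose proof contraction_factor.
  assert (Lim1 : is_lim_seq (fun n => H_op G L (normalized n) x) (H_op G L eigenfunction x)).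
  { apply (is_lim_seq_geom_bound _ _ (L * (C * L * L * (E0 / (1 - q)))) q); auto.
    intros n.
    rewrite <- H_op_minus by auto using normalized_continuous, eigenfunction_continuous.
    replace (L * (C * L * L * (E0 / (1 - q))) * q ^ n)
      with (L * (C * L * L * (E0 * q ^ n / (1 - q)))) by (field; lra).
    apply H_op_abs_le; auto.
    - intros z. pose proof (normalized_continuous n). pose proof eigenfunction_continuous.
      auto with Rcont.
    - intros y Hy. rewrite Rabs_minus_sym. apply eigenfunction_close, Hy. }
  assert (Lim2 : is_lim_seq (fun n => ratio n * normalized (S n) x) (eigval * eigenfunction x)).
  { apply is_lim_seq_mult'; [apply ratio_is_lim|].
    apply (is_lim_seq_incr_1 (fun n => normalized n x)), eigenfunction_is_lim, Hx. }
  apply (is_lim_seq_ext _ _ _ (fun n => H_op_normalized n x)) in Lim1.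
  apply is_lim_seq_unique in Lim1. apply is_lim_seq_unique in Lim2.
  rewrite Lim1 in Lim2. injection Lim2. auto.
Qed.

End PowerIteration.

(* Comparability with [x] on [[0, L]] places [w] in the interior of the cone of nonnegative
   functions; this is what the subsolution_rate_le arguments below need. *)
Definition positive_eigenpair L r (w : R -> R) := 0 < r /\ continuous_R w /\
  (exists a b, 0 < a /\ forall x, 0 <= x <= L -> a * x <= w x <= b * x) /\
  forall x, 0 <= x <= L -> H_op G L w x = r * w x.

Lemma positive_eigenpair_exists L : 0 < L -> exists r w, positive_eigenpair L r w.
Proof.
  intros HL. destruct (odd_kernel_squeeze L HL) as (c & C & Hsq).
  destruct (squeeze_constants L c C HL Hsq) as [Hc HcC].
  pose proof (moment_id_pos L HL).
  exists (eigval L), (eigenfunction L). split; [|split; [|split]].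
  - pose proof (eigval_ge L c C HL Hsq). nra.
  - apply (eigenfunction_continuous L c C HL Hsq).
  - exists (c / (C * moment L (fun y => y))), (C / (c * moment L (fun y => y))).
    split; [apply Rdiv_lt_0_compat; nra|]. apply (eigenfunction_bounds L c C HL Hsq).
  - apply (eigen_equation L c C HL Hsq).
Qed.

(** * Comparison of eigenfunctions *)

Lemma subsolution_iterate_le L (f g : R -> R) al be ka : 0 <= L -> continuous_R f -> continuous_R g ->
  0 <= al -> 0 <= be -> 0 <= ka ->
  (forall x, 0 <= x <= L -> H_op G L f x <= al * f x) ->
  (forall x, 0 <= x <= L -> be * g x <= H_op G L g x) ->
  (forall x, 0 <= x <= L -> ka * g x <= f x) ->
  forall n x, 0 <= x <= L -> ka * be ^ n * g x <= al ^ n * f x.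
Proof.
  intros HL Hf Hg Hal Hbe Hka Hf1 Hg1 Hfg n. induction n; intros x Hx.
  - simpl. rewrite !Rmult_1_r, Rmult_1_l. auto.
  - simpl. pose proof (pow_le be n Hbe). pose proof (pow_le al n Hal).
    apply Rle_trans with (ka * be ^ n * H_op G L g x).
    + replace (ka * (be * be ^ n) * g x) with (ka * be ^ n * (be * g x)) by ring.
      apply Rmult_le_compat_l; [apply Rmult_le_pos |]; auto.
    + rewrite <- H_op_scal by auto.
      apply Rle_trans with (H_op G L (fun y => al ^ n * f y) x).
      * apply H_op_le; auto; [intros z; auto with Rcont | intros z; auto with Rcont | lra].
      * rewrite H_op_scal by auto. replace (al * al ^ n * f x) with (al ^ n * (al * f x)) by ring.
        apply Rmult_le_compat_l; auto.
Qed.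

Lemma subsolution_rate_le L (f g : R -> R) al be ka x0 : 0 <= L -> continuous_R f -> continuous_R g ->
  0 <= al -> 0 <= be -> 0 < ka ->
  (forall x, 0 <= x <= L -> H_op G L f x <= al * f x) ->
  (forall x, 0 <= x <= L -> be * g x <= H_op G L g x) ->
  (forall x, 0 <= x <= L -> ka * g x <= f x) ->
  0 <= x0 <= L -> 0 < g x0 -> be <= al.
Proof.
  intros HL Hf Hg Hal Hbe Hka Hf1 Hg1 Hfg Hx0 Hg0.
  pose proof (subsolution_iterate_le L f g al be ka HL Hf Hg Hal Hbe (Rlt_le _ _ Hka) Hf1 Hg1 Hfg) as It.
  destruct (Rle_dec be al) as [|Hn]; auto. exfalso.
  destruct (Req_dec al 0) as [E|Hne].
  - pose proof (It 1%nat x0 Hx0) as H1. rewrite E in H1. simpl in H1.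
    assert (0 < ka * (be * 1) * g x0) by (repeat apply Rmult_lt_0_compat; lra). lra.
  - assert (Ht : 1 < be / al).
    { apply Rmult_lt_reg_r with al; [lra|]. unfold Rdiv. rewrite Rmult_assoc, Rinv_l; lra. }
    destruct (pow_unbounded (be / al) (f x0 / (ka * g x0)) Ht) as (n & Hn').
    pose proof (It n x0 Hx0) as Hn1.
    assert (Hp : 0 < al ^ n) by (apply pow_lt; lra).
    assert (E : be ^ n = (be / al) ^ n * al ^ n) by (rewrite <- Rpow_mult_distr; f_equal; field; lra).
    rewrite E in Hn1.
    assert (f x0 < ka * (be / al) ^ n * g x0).
    { apply Rmult_lt_reg_r with (/ (ka * g x0)); [apply Rinv_0_lt_compat, Rmult_lt_0_compat; lra|].
      replace (ka * (be / al) ^ n * g x0 * / (ka * g x0)) with ((be / al) ^ n) by (field; lra).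
      exact Hn'. }
    assert (al ^ n * f x0 < al ^ n * (ka * (be / al) ^ n * g x0)) by (apply Rmult_lt_compat_l; auto).
    lra.
Qed.

Lemma positive_eigenpair_nonneg L r (w : R -> R) x : positive_eigenpair L r w ->
  0 <= x <= L -> 0 <= w x.
Proof. intros (_ & _ & (a & b & Ha & Hab) & _) Hx. destruct (Hab x Hx). nra. Qed.

Lemma positive_eigenpair_le L r w e u : 0 < L ->
  positive_eigenpair L r w -> positive_eigenpair L e u -> e <= r.
Proof.
  intros HL (Hr & Hw & (a & b & Ha & Hab) & Hweq) (He & Hu & (a' & b' & Ha' & Hab') & Hueq).
  destruct (Hab' L ltac:(lra)). assert (Hb' : 0 < b') by nra.
  apply (subsolution_rate_le L w u r e (a / b') L); auto; try lra.
  - apply Rdiv_lt_0_compat; lra.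
  - intros x Hx. rewrite Hweq; auto; lra.
  - intros x Hx. rewrite Hueq; auto; lra.
  - intros x Hx. destruct (Hab x Hx). destruct (Hab' x Hx).
    apply Rle_trans with (a / b' * (b' * x));
      [apply Rmult_le_compat_l; [apply Rlt_le, Rdiv_lt_0_compat|]; lra|].
    replace (a / b' * (b' * x)) with (a * x) by (field; lra). lra.
  - nra.
Qed.

(* By [H_op_squeeze], a nonnegative eigenfunction lies between multiples of [x]. *)
Lemma pos_eigenvalue_eigenpair L e : 0 < L -> pos_eigenvalue G L e ->
  exists u, positive_eigenpair L e u.
Proof.
  intros HL (u & (HC1 & Hu0) & Hnn & (x0 & Hx0 & Hux0) & Heq).
  set (ut := fun x => u (clamp L x)).
  assert (Cu : continuous_R ut) by (apply continuous_R_clamp, C1_on_cont_on; auto; lra).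
  assert (Eu : forall x, 0 <= x <= L -> ut x = u x) by (intros; unfold ut; rewrite clamp_id; auto).
  assert (Hpos : forall x, 0 <= x <= L -> 0 <= ut x) by (intros; rewrite Eu; auto).
  assert (Hut : forall x, 0 <= x <= L -> H_op G L ut x = e * ut x).
  { intros x Hx. rewrite Eu, Heq by auto. apply H_op_ext; [lra | auto]. }
  assert (Hx0p : 0 < x0) by (destruct (Req_dec x0 0); [subst; contradiction | lra]).
  assert (Hu0p : 0 < ut x0) by (rewrite Eu by auto; pose proof (Hnn x0 Hx0); lra).
  destruct (odd_kernel_squeeze L HL) as (c & C & Hsq). pose proof Hsq as (Hc & HC & _).
  set (P := moment L ut).
  assert (HP : 0 < P).
  { apply (RInt_Rpos _ 0 L x0); [intros z; auto with Rcont | | lra | apply Rmult_lt_0_compat; lra].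
    intros y Hy. apply Rmult_le_pos; [lra | auto]. }
  pose proof (fun x Hx => H_op_squeeze L c C ut x Hsq Cu Hpos Hx) as Hcmp. fold P in Hcmp.
  assert (He : 0 < e).
  { destruct (Hcmp x0 Hx0) as [K _]. rewrite Hut in K by auto.
    assert (0 < c * x0 * P) by (repeat apply Rmult_lt_0_compat; lra). nra. }
  exists ut. split; [auto|]. split; [auto|]. split; [|auto].
  exists (c * P / e), (C * P / e). split; [apply Rdiv_lt_0_compat; nra|].
  intros x Hx. destruct (Hcmp x Hx) as [K1 K2]. rewrite Hut in K1, K2 by auto.
  split; apply Rmult_le_reg_l with e; auto;
    [replace (e * (c * P / e * x)) with (c * x * P) by (field; lra)
    |replace (e * (C * P / e * x)) with (C * x * P) by (field; lra)]; lra.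
Qed.

(* Restricting [H_op G L2] to [[0, L1]] loses the contribution of [[L1, L2]], which is at
   least a fixed multiple of [x], hence of [w2 x]. *)
Lemma H_op_restrict_le L1 L2 r2 w2 : 0 < L1 -> L1 < L2 -> positive_eigenpair L2 r2 w2 ->
  exists de, 0 < de /\ forall x, 0 <= x <= L1 -> H_op G L1 w2 x <= (r2 - de) * w2 x.
Proof.
  intros HL1 HL12 (Hr2 & Hw2 & (a2 & b2 & Ha2 & Hab2) & Heq2).
  destruct (odd_kernel_squeeze L2 ltac:(lra)) as (c & C & Hc & HC & Hb).
  set (J := RInt (fun y => y * w2 y) L1 L2).
  assert (CJ : continuous_R (fun y => y * w2 y)) by (intros z; auto with Rcont).
  assert (HJ : 0 < J).
  { apply RInt_gt_0; [lra | | intros; apply CJ].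
    intros y Hy. destruct (Hab2 y ltac:(lra)).
    assert (0 < a2 * y) by (apply Rmult_lt_0_compat; lra). apply Rmult_lt_0_compat; lra. }
  assert (Hb2 : 0 < b2) by (destruct (Hab2 L2 ltac:(lra)); nra).
  exists (c * J / b2). split; [apply Rdiv_lt_0_compat; nra|].
  intros x Hx.
  assert (Ex : forall a b, ex_RInt (fun y => odd_kernel G x y * w2 y) a b)
    by (intros; apply ex_RInt_int_op; [apply odd_kernel_G_continuous | apply Hw2]).
  assert (E : H_op G L2 w2 x = H_op G L1 w2 x + RInt (fun y => odd_kernel G x y * w2 y) L1 L2)
    by (symmetry; apply RInt_RChasles; auto).
  rewrite Heq2 in E by lra.
  assert (Hcut : c * x * J <= RInt (fun y => odd_kernel G x y * w2 y) L1 L2).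
  { unfold J. rewrite <- RInt_Rscal by (apply ex_RInt_continuous_R, CJ).
    apply RInt_Rle; [lra | apply ex_RInt_Rscal, ex_RInt_continuous_R, CJ | auto |].
    intros y Hy. destruct (Hb x y ltac:(lra) ltac:(lra)). destruct (Hab2 y ltac:(lra)).
    replace (c * x * (y * w2 y)) with (c * x * y * w2 y) by ring.
    apply Rmult_le_compat_r; nra. }
  destruct (Hab2 x ltac:(lra)).
  assert (c * J / b2 * w2 x <= c * x * J).
  { apply Rle_trans with (c * J / b2 * (b2 * x));
      [apply Rmult_le_compat_l; [apply Rlt_le, Rdiv_lt_0_compat; nra | lra]|].
    right; field; lra. }
  lra.
Qed.

Lemma positive_eigenpair_strict_mono L1 L2 r1 w1 r2 w2 : 0 < L1 -> L1 < L2 ->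
  positive_eigenpair L1 r1 w1 -> positive_eigenpair L2 r2 w2 -> r1 < r2.
Proof.
  intros HL1 HL12 HE1 HE2.
  destruct (H_op_restrict_le L1 L2 r2 w2 HL1 HL12 HE2) as (de & Hde & Hsplit).
  destruct HE1 as (Hr1 & Hw1 & (a1 & b1 & Ha1 & Hab1) & Heq1).
  destruct HE2 as (Hr2 & Hw2 & (a2 & b2 & Ha2 & Hab2) & Heq2).
  destruct (Hab1 L1 ltac:(lra)). destruct (Hab2 L1 ltac:(lra)).
  assert (Hb1 : 0 < b1) by nra.
  assert (Hw2L : 0 < w2 L1) by (assert (0 < a2 * L1) by (apply Rmult_lt_0_compat; lra); lra).
  assert (Hal : 0 <= r2 - de).
  { pose proof (Hsplit L1 ltac:(lra)).
    assert (0 <= H_op G L1 w2 L1)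
      by (apply H_op_nonneg; auto; [lra | intros y Hy; destruct (Hab2 y ltac:(lra)); nra | lra]).
    destruct (Rle_dec 0 (r2 - de)); auto.
    assert ((r2 - de) * w2 L1 < 0) by (apply Rmult_neg_pos; lra). lra. }
  assert (r1 <= r2 - de); [|lra].
  apply (subsolution_rate_le L1 w2 w1 (r2 - de) r1 (a2 / b1) L1); auto; try lra.
  - apply Rdiv_lt_0_compat; lra.
  - intros x Hx; rewrite Heq1; auto; lra.
  - intros x Hx. destruct (Hab1 x Hx). destruct (Hab2 x ltac:(lra)).
    apply Rle_trans with (a2 / b1 * (b1 * x));
      [apply Rmult_le_compat_l; [apply Rlt_le, Rdiv_lt_0_compat|]; lra|].
    replace (a2 / b1 * (b1 * x)) with (a2 * x) by (field; lra). lra.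
  - assert (0 < a1 * L1) by (apply Rmult_lt_0_compat; lra). lra.
Qed.

(** * The eigenvalue is at most [1] *)

Lemma RInt_G_near_1 eps : 0 < eps -> exists A, 0 < A /\
  forall a b, a <= - A -> A <= b -> Rabs (RInt G a b - 1) < eps.
Proof.
  intros He. pose proof G_is_RInt_gen as Hi.
  unfold is_RInt_gen, filterlimi, filtermapi in Hi. simpl in Hi.
  destruct (Hi (ball 1 (mkposreal eps He))) as [Q Rr HQ HR HP].
  { exists (mkposreal eps He). auto. }
  destruct HQ as (M1 & HM1). destruct HR as (M2 & HM2).
  pose proof (Rabs_pos M1). pose proof (Rabs_pos M2).
  pose proof (Rle_abs (- M1)). pose proof (Rle_abs M2). rewrite Rabs_Ropp in *.
  exists (Rabs M1 + Rabs M2 + 1). split; [lra|].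
  intros a b Ha Hb.
  destruct (HP a b) as (y & Hy & Hyb); [apply HM1; lra | apply HM2; lra |].
  rewrite (@is_RInt_unique R_CompleteNormedModule G a b y Hy). apply Hyb.
Qed.

Lemma RInt_G_nonneg a b : a <= b -> 0 <= RInt G a b.
Proof.
  intros Hab. apply RInt_Rnonneg; auto; [apply ex_RInt_continuous_R, G_continuous | intros; apply G_nonneg].
Qed.

Lemma RInt_G_le_1 a b : a <= b -> RInt G a b <= 1.
Proof.
  intros Hab. apply Rnot_lt_le. intros Hlt.
  destruct (RInt_G_near_1 (RInt G a b - 1)) as (A & HA & HT); [lra|].
  pose proof (HT (Rmin a (- A)) (Rmax b A) (Rmin_r _ _) (Rmax_r _ _)) as H1.
  apply Rabs_def2 in H1.
  assert (Ex : forall u v, ex_RInt G u v) by (intros; apply ex_RInt_continuous_R, G_continuous).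
  rewrite <- (RInt_RChasles G (Rmin a (- A)) a (Rmax b A)), <- (RInt_RChasles G a b (Rmax b A)) in H1
    by auto.
  pose proof (RInt_G_nonneg (Rmin a (- A)) a (Rmin_l _ _)).
  pose proof (RInt_G_nonneg b (Rmax b A) (Rmax_l _ _)). lra.
Qed.

Lemma RInt_G_tails eps : 0 < eps -> exists A, 0 < A /\
  (forall a b, a <= - A -> A <= b -> 1 - eps <= RInt G a b) /\
  (forall a b, A <= a -> a <= b -> RInt G a b <= eps).
Proof.
  intros He. destruct (RInt_G_near_1 (eps / 2)) as (A & HA & HT); [lra|].
  exists A. split; auto. split.
  - intros a b Ha Hb. pose proof (HT a b Ha Hb) as H. apply Rabs_def2 in H. lra.
  - intros a b Ha Hab.
    pose proof (HT (- A) a ltac:(lra) Ha) as H1. pose proof (HT (- A) b ltac:(lra) ltac:(lra)) as H2.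
    rewrite <- (RInt_RChasles G (- A) a b) in H2 by (apply ex_RInt_continuous_R, G_continuous).
    apply Rabs_def2 in H1. apply Rabs_def2 in H2. lra.
Qed.

(* At a maximum point of [w], [H w <= w * int G <= w]. *)
Lemma positive_eigenpair_le_1 L r w : 0 < L -> positive_eigenpair L r w -> r <= 1.
Proof.
  intros HL HE. pose proof HE as (Hr & Hw & _ & Heq).
  destruct (continuity_ab_maj w 0 L) as (xm & Hm & Hxm);
    [lra | intros; apply continuous_continuity_pt, Hw |].
  assert (Hwm : 0 < w xm).
  { destruct HE as (_ & _ & (a & b & Ha & Hab) & _). destruct (Hab L ltac:(lra)).
    pose proof (Hm L ltac:(lra)). assert (0 < a * L) by (apply Rmult_lt_0_compat; lra). lra. }
  assert (CG : continuous_R (fun y => G (xm - y))).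
  { intros z. apply (continuous_Rcomp (fun y => xm - y) G); auto with Rcont. apply G_continuous. }
  assert (K : H_op G L w xm <= w xm * RInt (fun y => G (xm - y)) 0 L).
  { unfold H_op. rewrite <- RInt_Rscal by (apply ex_RInt_continuous_R, CG).
    apply RInt_Rle; [lra | apply ex_RInt_H_op, Hw | apply ex_RInt_Rscal, ex_RInt_continuous_R, CG |].
    intros y Hy. pose proof (G_nonneg (xm + y)). pose proof (G_nonneg (xm - y)).
    pose proof (positive_eigenpair_nonneg L r w y HE Hy). pose proof (Hm y Hy). nra. }
  rewrite Heq, RInt_comp_reflect, Rminus_0_r in K by (auto; apply G_continuous).
  pose proof (RInt_G_le_1 (xm - L) xm ltac:(lra)).
  apply Rmult_le_reg_r with (w xm); nra.
Qed.

(** * The eigenvalue tends to [1] *)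

Lemma is_derive_int_op_upper (a b : R -> R) y t : continuous_R b ->
  is_derive (fun s => a y * int_op (odd_kernel G) 0 s b y) t (a y * (odd_kernel G y t * b t)).
Proof.
  intros Hb. apply is_derive_scal. apply (is_derive_RInt_upper (fun x => odd_kernel G y x * b x)).
  intros z. apply continuous_Rmult; [apply odd_kernel_G_continuous | apply Hb].
Qed.

Lemma is_derive_iterated_integral L (a b : R -> R) t : continuous_R a -> continuous_R b ->
  is_derive (fun s => RInt (fun y => a y * int_op (odd_kernel G) 0 s b y) 0 L) t (b t * H_op G L a t).
Proof.
  intros Ha Hb.
  assert (Dk : forall y s, Derive (fun z => a y * int_op (odd_kernel G) 0 z b y) s
                          = a y * (odd_kernel G y s * b s))
    by (intros; apply is_derive_unique, is_derive_int_op_upper, Hb).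
  replace (b t * H_op G L a t)
    with (RInt (fun y => Derive (fun z => a y * int_op (odd_kernel G) 0 z b y) t) 0 L).
  2:{ unfold H_op. rewrite <- RInt_Rscal by (apply ex_RInt_H_op, Ha).
      apply RInt_ext. intros y _. rewrite Dk, (odd_kernel_sym y t). simpl. unfold odd_kernel. ring. }
  apply (is_derive_RInt_param (fun z y => a y * int_op (odd_kernel G) 0 z b y) 0 L t).
  - exists (mkposreal 1 Rlt_0_1). intros z _ y _. eexists. apply is_derive_int_op_upper, Hb.
  - intros y _. pose proof G_continuous.
    apply (continuity_2d_pt_ext
      (fun u v => a (0 * u + 1 * v) * ((G ((-1) * u + 1 * v) - G (1 * u + 1 * v)) * b (1 * u + 0 * v)))).
    { intros u v. rewrite Dk. unfold odd_kernel. repeat (f_equal; try ring). }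
    repeat apply continuity_2d_pt_mult; try apply continuity_2d_pt_minus; apply continuity_2d_pt_lin; auto.
  - exists (mkposreal 1 Rlt_0_1). intros z _. apply ex_RInt_continuous_R.
    intros y. apply continuous_Rmult; [apply Ha|].
    apply int_op_continuous; auto using odd_kernel_G_continuous, odd_kernel_G_lipschitz.
Qed.

(* Both sides, with [L] replaced by [t] in the outer (resp. inner) domain, vanish at [t = 0] and
   have the same derivative in [t]. *)
Lemma H_op_symmetric L (a b : R -> R) : 0 <= L -> continuous_R a -> continuous_R b ->
  RInt (fun x => b x * H_op G L a x) 0 L = RInt (fun x => a x * H_op G L b x) 0 L.
Proof.
  intros HL Ha Hb.
  set (Phi := fun t => RInt (fun x => b x * H_op G L a x) 0 t).
  set (Psi := fun t => RInt (fun y => a y * int_op (odd_kernel G) 0 t b y) 0 L).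
  assert (D : forall t, is_derive (fun s => Phi s - Psi s) t 0).
  { intros t. replace 0 with (b t * H_op G L a t - b t * H_op G L a t) by ring.
    apply (@is_derive_minus R_AbsRing R_NormedModule).
    - apply (is_derive_RInt_upper (fun x => b x * H_op G L a x)).
      intros z. pose proof (H_op_continuous L a Ha). auto with Rcont.
    - apply is_derive_iterated_integral; auto. }
  destruct (MVT_Rle (fun s => Phi s - Psi s) (fun _ => 0) 0 L HL) as (c & _ & Ec); [intros; apply D|].
  assert (Phi 0 = 0) by apply (@RInt_point R_CompleteNormedModule).
  assert (Psi 0 = 0).
  { unfold Psi. rewrite (RInt_ext _ (fun _ => 0)), RInt_Rconst; [simpl; ring|].
    intros y _. unfold int_op. rewrite (@RInt_point R_CompleteNormedModule). apply Rmult_0_r. }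
  unfold Phi, Psi in *. simpl in Ec. change (H_op G L b) with (int_op (odd_kernel G) 0 L b). lra.
Qed.

Lemma H_op_square_diff L (w q : R -> R) x : continuous_R w -> continuous_R q ->
  RInt (fun y => odd_kernel G x y * w y * ((q x - q y) * (q x - q y))) 0 L =
  q x * q x * H_op G L w x - 2 * q x * H_op G L (fun y => w y * q y) x
  + H_op G L (fun y => w y * (q y * q y)) x.
Proof.
  intros Hw Hq.
  assert (Cv : continuous_R (fun y => w y * q y)) by (intros z; auto 20 with Rcont).
  assert (Cv2 : continuous_R (fun y => w y * (q y * q y))) by (intros z; auto 20 with Rcont).
  pose proof (ex_RInt_H_op L w x Hw) as E1. pose proof (ex_RInt_H_op L _ x Cv) as E2.
  pose proof (ex_RInt_H_op L _ x Cv2) as E3.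
  unfold H_op. rewrite <- !RInt_Rscal by auto.
  rewrite <- RInt_Rminus, <- RInt_Rplus by auto using ex_RInt_Rscal, ex_RInt_Rminus.
  apply RInt_ext. intros y _. simpl. unfold odd_kernel. ring.
Qed.

(* The quadratic form [int int k(x,y) w(x) w(y) (q x - q y)^2] is nonnegative; expanding it with
   [H w = r w] and the symmetry of [H_op] gives the Rayleigh bound for [v = w q]. *)
Lemma rayleigh_bound L r w (q : R -> R) : 0 < L -> positive_eigenpair L r w -> continuous_R q ->
  RInt (fun x => (w x * q x) * H_op G L (fun y => w y * q y) x) 0 L
  <= r * RInt (fun x => (w x * q x) * (w x * q x)) 0 L.
Proof.
  intros HL HE Hq. pose proof HE as (Hr & Hw & _ & Heq).
  set (v := fun y => w y * q y). set (v2 := fun y => w y * (q y * q y)).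
  assert (Cv : continuous_R v) by (intros z; unfold v; auto 20 with Rcont).
  assert (Cv2 : continuous_R v2) by (intros z; unfold v2; auto 20 with Rcont).
  pose proof (H_op_continuous L w Hw). pose proof (H_op_continuous L v Cv).
  pose proof (H_op_continuous L v2 Cv2).
  set (J := fun x => w x * (q x * q x * H_op G L w x) - 2 * (v x * H_op G L v x) + w x * H_op G L v2 x).
  assert (J0 : 0 <= RInt J 0 L).
  { apply RInt_Rnonneg; [lra | apply ex_RInt_continuous_R; intros z; unfold J; auto 20 with Rcont |].
    intros x Hx.
    replace (J x) with (w x * RInt (fun y => odd_kernel G x y * w y * ((q x - q y) * (q x - q y))) 0 L)
      by (rewrite H_op_square_diff by auto; unfold J, v, v2; ring).
    apply Rmult_le_pos; [apply (positive_eigenpair_nonneg L r w x HE Hx)|].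
    pose proof (odd_kernel_G_continuous x).
    apply RInt_Rnonneg; [lra | apply ex_RInt_continuous_R; intros z; auto 20 with Rcont |].
    intros y Hy. pose proof (positive_eigenpair_nonneg L r w y HE Hy).
    pose proof (odd_kernel_nonneg x y ltac:(lra) ltac:(lra)).
    apply Rmult_le_pos; [apply Rmult_le_pos | apply Rle_0_sqr]; auto. }
  assert (Ex : forall f, continuous_R f -> ex_RInt f 0 L) by (intros; apply ex_RInt_continuous_R; auto).
  unfold J in J0.
  rewrite RInt_Rplus, RInt_Rminus, RInt_Rscal in J0 by (apply Ex; intros z; auto 20 with Rcont).
  assert (T1 : RInt (fun x => w x * (q x * q x * H_op G L w x)) 0 L = r * RInt (fun x => v x * v x) 0 L).
  { rewrite <- RInt_Rscal by (apply Ex; intros z; auto 20 with Rcont).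
    apply RInt_ext_le; [lra|]. intros x Hx. rewrite Heq by auto. unfold v. ring. }
  assert (T3 : RInt (fun x => w x * H_op G L v2 x) 0 L = r * RInt (fun x => v x * v x) 0 L).
  { rewrite (H_op_symmetric L v2 w) by (auto; lra).
    rewrite <- RInt_Rscal by (apply Ex; intros z; auto 20 with Rcont).
    apply RInt_ext_le; [lra|]. intros x Hx. rewrite Heq by auto. unfold v, v2. ring. }
  change (RInt (fun x => v x * H_op G L v x) 0 L <= r * RInt (fun x => v x * v x) 0 L). lra.
Qed.

Lemma rayleigh_plateau L r w : 0 < L -> positive_eigenpair L r w ->
  RInt (fun x => plateau x * H_op G L plateau x) 0 L <= r * RInt (fun x => plateau x * plateau x) 0 L.
Proof.
  intros HL HE. pose proof HE as (Hr & Hw & (a & b & Ha & Hab) & Heq).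
  set (q := fun x => plateau x * / Rmax (w x) a).
  assert (Cq : continuous_R q).
  { intros x. unfold q. apply continuous_Rmult; [apply plateau_continuous|].
    apply continuous_Rinv_comp; [apply continuous_Rmax_const, Hw|].
    pose proof (Rmax_r (w x) a). lra. }
  assert (Ev : forall x, 0 <= x <= L -> w x * q x = plateau x).
  { intros x Hx. unfold q. destruct (Rle_dec x 1); [rewrite plateau_zero by auto; ring|].
    destruct (Hab x Hx). assert (a <= w x) by nra.
    rewrite Rmax_left by auto. field. lra. }
  pose proof (rayleigh_bound L r w q HL HE Cq) as Ray.
  rewrite (RInt_ext_le (fun x => w x * q x * (w x * q x)) (fun x => plateau x * plateau x)) in Ray
    by (lra || intros x Hx; rewrite Ev; auto).
  rewrite (RInt_ext_le _ (fun x => plateau x * H_op G L plateau x)) in Ray; [exact Ray | lra |].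
  intros x Hx. rewrite Ev by auto. f_equal. apply H_op_ext; [lra | auto].
Qed.

Lemma int_op_one L x : int_op (odd_kernel G) 2 L (fun _ => 1) x
  = RInt G (x - L) (x - 2) - RInt G (x + 2) (x + L).
Proof.
  pose proof G_continuous as Hc. unfold int_op.
  assert (C1 : continuous_R (fun y => G (x - y)))
    by (intros z; apply (continuous_Rcomp (fun y => x - y) G); auto with Rcont).
  assert (C2 : continuous_R (fun y => G (x + y)))
    by (intros z; apply (continuous_Rcomp (fun y => x + y) G); auto with Rcont).
  rewrite (RInt_ext _ (fun y => G (x - y) - G (x + y))) by (intros; unfold odd_kernel; simpl; ring).
  rewrite RInt_Rminus by (apply ex_RInt_continuous_R; auto).
  rewrite RInt_comp_reflect, RInt_comp_shift by exact Hc. reflexivity.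
Qed.

Lemma plateau_energy_ge L : 2 <= L ->
  RInt (int_op (odd_kernel G) 2 L (fun _ => 1)) 2 L <= RInt (fun x => plateau x * H_op G L plateau x) 0 L.
Proof.
  intros HL.
  assert (CK : continuous_R (int_op (odd_kernel G) 2 L (fun _ => 1))).
  { apply int_op_continuous; auto using odd_kernel_G_continuous, odd_kernel_G_lipschitz.
    intros z; apply continuous_Rconst. }
  pose proof plateau_continuous. pose proof (H_op_continuous L plateau plateau_continuous).
  assert (Ex : forall a b, ex_RInt (fun x => plateau x * H_op G L plateau x) a b)
    by (intros; apply ex_RInt_continuous_R; intros z; auto with Rcont).
  assert (Hnn : forall x, 0 <= x -> 0 <= H_op G L plateau x)
    by (intros; apply H_op_nonneg; auto; [lra | intros; apply plateau_range]).
  rewrite <- (RInt_RChasles _ 0 2 L) by auto.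
  assert (0 <= RInt (fun x => plateau x * H_op G L plateau x) 0 2).
  { apply RInt_Rnonneg; [lra | auto |]. intros y Hy.
    apply Rmult_le_pos; [apply plateau_range | apply Hnn; lra]. }
  enough (RInt (int_op (odd_kernel G) 2 L (fun _ => 1)) 2 L
          <= RInt (fun x => plateau x * H_op G L plateau x) 2 L) by lra.
  apply RInt_Rle; [lra | apply ex_RInt_continuous_R, CK | auto |].
  intros x Hx. rewrite plateau_one, Rmult_1_l by lra. unfold H_op.
  change (RInt (fun y => odd_kernel G x y * 1) 2 L <= RInt (fun y => odd_kernel G x y * plateau y) 0 L).
  pose proof (odd_kernel_G_continuous x).
  assert (Exk : forall a b, ex_RInt (fun y => odd_kernel G x y * plateau y) a b)
    by (intros; apply ex_RInt_continuous_R; intros z; auto with Rcont).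
  rewrite <- (RInt_RChasles _ 0 2 L) by auto.
  rewrite (RInt_ext_le (fun y => odd_kernel G x y * plateau y) (fun y => odd_kernel G x y * 1) 2 L)
    by (lra || intros y Hy; rewrite plateau_one by lra; reflexivity).
  enough (0 <= RInt (fun y => odd_kernel G x y * plateau y) 0 2) by lra.
  apply RInt_Rnonneg; [lra | auto |]. intros y Hy.
  apply Rmult_le_pos; [apply odd_kernel_nonneg; lra | apply plateau_range].
Qed.

(* On [[A + 2, L - A]] the kernel mass [int_op _ 2 L 1] is close to [1]; near the ends it is
   at least [-1] and [-e] respectively. *)
Lemma plateau_energy_linear e : 0 < e -> exists A, 0 < A /\ forall L, 2 * A + 2 <= L ->
  (L - 2 * A - 2) * (1 - 2 * e) - A * (1 + e) <= RInt (int_op (odd_kernel G) 2 L (fun _ => 1)) 2 L.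
Proof.
  intros He. destruct (RInt_G_tails e He) as (A & HA & T1 & T2).
  exists A. split; auto. intros L HL.
  set (K := int_op (odd_kernel G) 2 L (fun _ => 1)).
  assert (CK : continuous_R K).
  { apply int_op_continuous; auto using odd_kernel_G_continuous, odd_kernel_G_lipschitz.
    intros z; apply continuous_Rconst. }
  assert (Ex : forall a b, ex_RInt K a b) by (intros; apply ex_RInt_continuous_R, CK).
  rewrite <- (RInt_RChasles K 2 (A + 2) L), <- (RInt_RChasles K (A + 2) (L - A) L) by auto.
  assert (P1 : A * (-1) <= RInt K 2 (A + 2)).
  { replace A with ((A + 2) - 2) at 1 by ring. apply RInt_Rge_const; auto; [lra|].
    intros x Hx. unfold K. rewrite int_op_one.
    pose proof (RInt_G_nonneg (x - L) (x - 2) ltac:(lra)).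
    pose proof (RInt_G_le_1 (x + 2) (x + L) ltac:(lra)). lra. }
  assert (P2 : (L - 2 * A - 2) * (1 - 2 * e) <= RInt K (A + 2) (L - A)).
  { replace (L - 2 * A - 2) with ((L - A) - (A + 2)) by ring. apply RInt_Rge_const; auto; [lra|].
    intros x Hx. unfold K. rewrite int_op_one.
    pose proof (T1 (x - L) (x - 2) ltac:(lra) ltac:(lra)).
    pose proof (T2 (x + 2) (x + L) ltac:(lra) ltac:(lra)). lra. }
  assert (P3 : A * (- e) <= RInt K (L - A) L).
  { replace A with (L - (L - A)) at 1 by ring. apply RInt_Rge_const; auto; [lra|].
    intros x Hx. unfold K. rewrite int_op_one.
    pose proof (RInt_G_nonneg (x - L) (x - 2) ltac:(lra)).
    pose proof (T2 (x + 2) (x + L) ltac:(lra) ltac:(lra)). lra. }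
  lra.
Qed.

(* Rayleigh bound for the plateau test function, whose energy grows like [L] with slope
   close to [1]. *)
Lemma positive_eigenpair_ge_1_minus eps : 0 < eps -> exists L0, 0 < L0 /\
  forall L r w, L0 <= L -> positive_eigenpair L r w -> 1 - eps <= r.
Proof.
  intros He. destruct (Rlt_dec eps 1) as [Hlt|Hge].
  2:{ exists 1. split; [lra|]. intros L r w _ (Hr & _). lra. }
  set (e := eps / 3).
  destruct (plateau_energy_linear e) as (A & HA & HK); [unfold e; lra|].
  exists (2 * A + 2 + (4 * A + 2) / e). split.
  { assert (0 < (4 * A + 2) / e) by (apply Rdiv_lt_0_compat; unfold e; lra). lra. }
  intros L r w HL0 HE. pose proof HE as (Hr & _).
  assert (He' : 0 < e) by (unfold e; lra).
  assert (HeL : 4 * A + 2 <= e * (L - 2 * A - 2)).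
  { replace (4 * A + 2) with (e * ((4 * A + 2) / e)) by (field; lra).
    apply Rmult_le_compat_l; lra. }
  assert (HL2 : 2 * A + 2 <= L) by (assert (0 < (4 * A + 2) / e) by (apply Rdiv_lt_0_compat; lra); lra).
  pose proof (HK L HL2) as HKL.
  pose proof (plateau_energy_ge L ltac:(lra)) as HE1.
  pose proof (rayleigh_plateau L r w ltac:(lra) HE) as Ray.
  assert (S1 : RInt (fun x => plateau x * plateau x) 0 L <= L).
  { replace L with ((L - 0) * 1) at 2 by ring. rewrite <- RInt_Rconst.
    apply RInt_Rle; [lra | | apply ex_RInt_const |].
    - apply ex_RInt_continuous_R. intros z. pose proof plateau_continuous. auto with Rcont.
    - intros t _. pose proof (plateau_range t). nra. }
  assert (r * RInt (fun x => plateau x * plateau x) 0 L <= r * L) by (apply Rmult_le_compat_l; lra).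
  assert (L * (1 - eps) <= r * L).
  { assert (A * e <= A) by (apply Rle_trans with (A * 1); [apply Rmult_le_compat_l; unfold e; lra | lra]).
    assert (0 <= (2 * A + 2) * (2 * e)) by (apply Rmult_le_pos; lra).
    unfold e in *. nra. }
  apply Rmult_le_reg_r with L; lra.
Qed.

End Kernel.

Lemma positive_eigenpair_pos_eigenvalue G (hG : kernel_hyp G) L r w : 0 < L ->
  positive_eigenpair G L r w -> pos_eigenvalue G L r.
Proof.
  intros HL HE. pose proof HE as (Hr & Hw & (a & b & Ha & Hab) & Heq).
  set (u := H_op G L (fun y => / r * w y)).
  assert (Eu : forall x, 0 <= x <= L -> u x = w x).
  { intros x Hx. unfold u. rewrite H_op_scal, Heq by auto. field. lra. }
  exists u. split; [split|].
  - apply H_op_C1; auto. intros z. auto with Rcont.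
  - apply H_op_at_0; auto.
  - split; [|split].
    + intros x Hx. rewrite Eu by auto. apply (positive_eigenpair_nonneg G L r w x HE Hx).
    + exists L. split; [lra|]. rewrite Eu by lra. destruct (Hab L ltac:(lra)). nra.
    + intros x Hx. rewrite (H_op_ext G L u w x), Heq, Eu by (auto; lra). reflexivity.
Qed.

Lemma positive_eigenpair_unique G (hG : kernel_hyp G) L r w e u : 0 < L ->
  positive_eigenpair G L r w -> positive_eigenpair G L e u -> e = r.
Proof.
  intros HL Hw Hu. apply Rle_antisym;
    [apply (positive_eigenpair_le G hG L r w e u) | apply (positive_eigenpair_le G hG L e u r w)]; auto.
Qed.

(* Set to [0] for [L <= 0]; at [L = 0], [H_op G 0] is the zero operator. *)
Definition principal_eigenvalue G (hG : kernel_hyp G) (L : R) : R :=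
  match Rlt_dec 0 L with
  | left HL => proj1_sig (constructive_indefinite_description _ (positive_eigenpair_exists G hG L HL))
  | right _ => 0
  end.

Lemma principal_eigenvalue_spec G (hG : kernel_hyp G) L : 0 < L ->
  exists w, positive_eigenpair G L (principal_eigenvalue G hG L) w.
Proof.
  intros HL. unfold principal_eigenvalue. destruct (Rlt_dec 0 L) as [HL'|]; [|lra].
  destruct (constructive_indefinite_description _ _) as (r & Hr). exact Hr.
Qed.

Lemma principal_eigenvalue_nonpos G (hG : kernel_hyp G) L : L <= 0 ->
  principal_eigenvalue G hG L = 0.
Proof.
  intros HL. unfold principal_eigenvalue. destruct (Rlt_dec 0 L); [exfalso; lra | reflexivity].
Qed.

Theorem proposition4p12 (G : R -> R) (hG : kernel_hyp G) :
  exists eps : R -> R,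
    (forall L, 0 < L ->
       pos_eigenvalue G L (eps L) /\
       (forall e, pos_eigenvalue G L e -> e = eps L)) /\
    eps 0 = 0 /\
    (forall L1 L2, 0 <= L1 -> L1 < L2 -> eps L1 < eps L2) /\
    is_lim eps p_infty 1.
Proof.
  pose proof (principal_eigenvalue_spec G hG) as Hspec.
  exists (principal_eigenvalue G hG). split; [|split; [|split]].
  - intros L HL. destruct (Hspec L HL) as (w & HE). split.
    + apply (positive_eigenpair_pos_eigenvalue G hG L _ w HL HE).
    + intros e He. destruct (pos_eigenvalue_eigenpair G hG L e HL He) as (u & HU).
      apply (positive_eigenpair_unique G hG L _ w e u HL HE HU).
  - apply principal_eigenvalue_nonpos; lra.
  - intros L1 L2 H1 H12. destruct (Hspec L2 ltac:(lra)) as (w2 & HE2).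
    destruct (Req_dec L1 0) as [->|Hne].
    + rewrite principal_eigenvalue_nonpos by lra. apply HE2.
    + destruct (Hspec L1 ltac:(lra)) as (w1 & HE1).
      apply (positive_eigenpair_strict_mono G hG L1 L2 _ w1 _ w2); auto; lra.
  - apply is_lim_spec. intros eps.
    destruct (positive_eigenpair_ge_1_minus G hG (eps / 2)) as (L0 & HL0 & Hlow);
      [pose proof (cond_pos eps); lra|].
    exists L0. intros L HL. destruct (Hspec L ltac:(lra)) as (w & HE).
    pose proof (Hlow L _ w ltac:(lra) HE). pose proof (positive_eigenpair_le_1 G hG L _ w ltac:(lra) HE).
    pose proof (cond_pos eps). apply Rabs_def1; lra.
Qed.
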